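(* Let $\Omega\subset\mathbb{C}$ be a simply connected domain and let $(h,\mathcal{M},\mathcal{N})$ be a Weierstrass data of the second kind on $\Omega$. Then there exists a map $\mathbf{X}=(\mathbf{x}_1,\mathbf{x}_2,\mathbf{x}_3,\mathbf{x}_4):\Omega\to\mathbb{L}^4$ (unique up to an additive constant vector) with $$\mathbf{X}_z=\mathcal{M}_z\begin{bmatrix}1\\ -i\\ -h\\ h\end{bmatrix}+\mathcal{N}_z\begin{bmatrix}0\\ ih\\ \frac12(1+h^2)\\ \frac12(1-h^2)\end{bmatrix},$$ which is a conformal spacelike immersion parameterizing a marginally trapped surface in $\mathbb{L}^4$, with induced metric $$ds^2=4\left|\mathcal{M}_z-(\mathrm{Re}\,h)\,\mathcal{N}_z\right|^2|dz|^2 .$$ Moreover, up to additive constants, $\mathbf{x}_1=\mathcal{M}$ and $\mathbf{x}_3+\mathbf{x}_4=\mathcal{N}$.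
   Context: $\Omega\subset\mathbb{R}^2\equiv\mathbb{C}$ has complex coordinate $z=u+iv$, and $\partial_z=\frac12(\partial_u-i\partial_v)$, $\partial_{\overline z}=\frac12(\partial_u+i\partial_v)$; subscripts denote partial derivatives. $\mathbb{L}^4$ is $\mathbb{R}^4$ with the Lorentzian metric $\langle x,y\rangle=x_1y_1+x_2y_2+x_3y_3-x_4y_4$; this form is extended complex-bilinearly to $\mathbb{C}^4$. A map $\mathbf{X}:\Omega\to\mathbb{L}^4$ is a conformal spacelike immersion with metric $\Lambda|dz|^2=\Lambda(du^2+dv^2)$, $\Lambda>0$, iff $\langle\mathbf{X}_z,\mathbf{X}_z\rangle=0$ and $\Lambda=2\langle\mathbf{X}_z,\overline{\mathbf{X}_z}\rangle>0$. Its mean curvature vector is $\mathbf{H}=\Delta_{ds^2}\mathbf{X}=\frac{4}{\Lambda}\mathbf{X}_{z\overline z}$. A spacelike surface is marginally trapped if $\langle\mathbf{H},\mathbf{H}\rangle=0$. A Weierstrass data of the second kind on $\Omega$ is a triple $(h,\mathcal{M},\mathcal{N})$ where $h:\Omega\to\mathbb{C}\setminus\{0\}$ and $\mathcal{M},\mathcal{N}:\Omega\to\mathbb{R}$ are $\mathcal{C}^2$, satisfying $h_{\overline z}=0$, $\mathcal{M}_{z\overline z}=(\mathrm{Re}\,h)\,\mathcal{N}_{z\overline z}$, and $\mathcal{M}_z-(\mathrm{Re}\,h)\,\mathcal{N}_z\neq0$ at every point of $\Omega$. *)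

From Stdlib Require Import Reals.
From Coquelicot Require Import Coquelicot.
Open Scope R_scope.

(* Points of Omega ⊂ R^2 ≅ C are pairs (u,v), z = u + i v. *)
Definition pt := (R * R)%type.

(* A continuous path / loop: gamma : R -> pt continuous (its restriction to
   [0,1] is the path; every continuous path on [0,1] extends by constants). *)
Definition path_in (Om : pt -> Prop) (g : R -> pt) : Prop :=
  (forall t, continuous g t) /\ (forall t, 0 <= t <= 1 -> Om (g t)).

Definition path_connected (Om : pt -> Prop) : Prop :=
  (exists p, Om p) /\
  forall p q, Om p -> Om q ->
    exists g, path_in Om g /\ g 0 = p /\ g 1 = q.

Definition loop_null_homotopic (Om : pt -> Prop) (g : R -> pt) : Prop :=
  exists H : pt -> pt,
    (forall x, continuous H x) /\
    (forall t s, 0 <= t <= 1 -> 0 <= s <= 1 -> Om (H (t, s))) /\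
    (forall t, H (t, 0) = g t) /\
    (forall t, H (t, 1) = g 0) /\
    (forall s, H (0, s) = g 0) /\
    (forall s, H (1, s) = g 0).

Definition simply_connected (Om : pt -> Prop) : Prop :=
  path_connected Om /\
  forall g, path_in Om g -> g 1 = g 0 -> loop_null_homotopic Om g.

Definition simply_connected_domain (Om : pt -> Prop) : Prop :=
  open Om /\ simply_connected Om.

Definition du (f : pt -> R) (p : pt) : R := Derive (fun t => f (t, snd p)) (fst p).
Definition dv (f : pt -> R) (p : pt) : R := Derive (fun t => f (fst p, t)) (snd p).

Definition has_partials_on (Om : pt -> Prop) (f : pt -> R) : Prop :=
  forall p, Om p ->
    ex_derive (fun t => f (t, snd p)) (fst p) /\
    ex_derive (fun t => f (fst p, t)) (snd p).

Definition C1_on (Om : pt -> Prop) (f : pt -> R) : Prop :=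
  has_partials_on Om f /\
  forall p, Om p -> continuous f p /\ continuous (du f) p /\ continuous (dv f) p.

Definition C2_on (Om : pt -> Prop) (f : pt -> R) : Prop :=
  C1_on Om f /\ C1_on Om (du f) /\ C1_on Om (dv f).

Definition cdu (F : pt -> C) (p : pt) : C :=
  (du (fun q => Re (F q)) p, du (fun q => Im (F q)) p).
Definition cdv (F : pt -> C) (p : pt) : C :=
  (dv (fun q => Re (F q)) p, dv (fun q => Im (F q)) p).

Definition dz (F : pt -> C) (p : pt) : C :=
  Cmult (RtoC (/2)) (Cminus (cdu F p) (Cmult Ci (cdv F p))).
Definition dzb (F : pt -> C) (p : pt) : C :=
  Cmult (RtoC (/2)) (Cplus (cdu F p) (Cmult Ci (cdv F p))).

Definition rc (f : pt -> R) : pt -> C := fun p => RtoC (f p).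

Definition CC2_on (Om : pt -> Prop) (F : pt -> C) : Prop :=
  C2_on Om (fun q => Re (F q)) /\ C2_on Om (fun q => Im (F q)).

Definition weierstrass_data_2 (Om : pt -> Prop) (h : pt -> C) (M N : pt -> R) : Prop :=
  CC2_on Om h /\ C2_on Om M /\ C2_on Om N /\
  (forall p, Om p -> h p <> RtoC 0) /\
  (forall p, Om p -> dzb h p = RtoC 0) /\
  (forall p, Om p ->
     dzb (dz (rc M)) p = Cmult (RtoC (Re (h p))) (dzb (dz (rc N)) p)) /\
  (forall p, Om p ->
     Cminus (dz (rc M) p) (Cmult (RtoC (Re (h p))) (dz (rc N) p)) <> RtoC 0).

Definition C4 := (C * C * C * C)%type.

Definition lor (a b : C4) : C :=
  match a, b with
  | (a1, a2, a3, a4), (b1, b2, b3, b4) =>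
      Cminus (Cplus (Cplus (Cmult a1 b1) (Cmult a2 b2)) (Cmult a3 b3)) (Cmult a4 b4)
  end.

Definition conj4 (a : C4) : C4 :=
  match a with (a1, a2, a3, a4) => (Cconj a1, Cconj a2, Cconj a3, Cconj a4) end.

Definition cscale4 (c : C) (a : C4) : C4 :=
  match a with (a1, a2, a3, a4) => (Cmult c a1, Cmult c a2, Cmult c a3, Cmult c a4) end.

Definition cadd4 (a b : C4) : C4 :=
  match a, b with
  | (a1, a2, a3, a4), (b1, b2, b3, b4) => (Cplus a1 b1, Cplus a2 b2, Cplus a3 b3, Cplus a4 b4)
  end.

Definition Xz (x1 x2 x3 x4 : pt -> R) (p : pt) : C4 :=
  (dz (rc x1) p, dz (rc x2) p, dz (rc x3) p, dz (rc x4) p).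
Definition Xzzb (x1 x2 x3 x4 : pt -> R) (p : pt) : C4 :=
  (dzb (dz (rc x1)) p, dzb (dz (rc x2)) p, dzb (dz (rc x3)) p, dzb (dz (rc x4)) p).

(* conformal factor Λ = 2 <X_z, conj X_z> (real part; it is real) *)
Definition Lambda (x1 x2 x3 x4 : pt -> R) (p : pt) : R :=
  2 * Re (lor (Xz x1 x2 x3 x4 p) (conj4 (Xz x1 x2 x3 x4 p))).

Definition conformal_spacelike_immersion (Om : pt -> Prop) (x1 x2 x3 x4 : pt -> R) : Prop :=
  C2_on Om x1 /\ C2_on Om x2 /\ C2_on Om x3 /\ C2_on Om x4 /\
  forall p, Om p ->
    lor (Xz x1 x2 x3 x4 p) (Xz x1 x2 x3 x4 p) = RtoC 0 /\
    Im (lor (Xz x1 x2 x3 x4 p) (conj4 (Xz x1 x2 x3 x4 p))) = 0 /\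
    Lambda x1 x2 x3 x4 p > 0.

Definition Hmean (x1 x2 x3 x4 : pt -> R) (p : pt) : C4 :=
  cscale4 (RtoC (4 / Lambda x1 x2 x3 x4 p)) (Xzzb x1 x2 x3 x4 p).

Definition marginally_trapped (Om : pt -> Prop) (x1 x2 x3 x4 : pt -> R) : Prop :=
  forall p, Om p -> lor (Hmean x1 x2 x3 x4 p) (Hmean x1 x2 x3 x4 p) = RtoC 0.

Definition WRep (h : pt -> C) (M N : pt -> R) (p : pt) : C4 :=
  let hp := h p in
  cadd4
    (cscale4 (dz (rc M) p) (RtoC 1, Copp Ci, Copp hp, hp))
    (cscale4 (dz (rc N) p)
       (RtoC 0, Cmult Ci hp,
        Cmult (RtoC (/2)) (Cplus (RtoC 1) (Cmult hp hp)),
        Cmult (RtoC (/2)) (Cminus (RtoC 1) (Cmult hp hp)))).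

From Stdlib Require Import Reals Lra Psatz Classical ClassicalEpsilon.
From Coquelicot Require Import Coquelicot.
Open Scope R_scope.

(* The components of X_z are prescribed, so x1 = M and each other x_k must be a potential of
   the real 1-form 2 Re (W_k dz).  These forms are C^1 and closed precisely because h is
   holomorphic and M_{z zbar} = (Re h) N_{z zbar}, and a closed C^1 form on a simply connected
   domain is exact.  Exactness comes from a line integral assembled from local potentials
   (Poincare's lemma on a square, by parametric integrals): along a path it is the sum of the
   increments of local potentials over a fine subdivision, independent of the subdivision, and
   it vanishes on null-homotopic loops because a Lebesgue-number grid on the homotopy moves the
   sum from one row of the grid to the next without changing it.  The rest is algebra: W is
   isotropic with hermitian norm 2 |M_z - (Re h) N_z|^2, and X_{z zbar} is a real multiple of
   the null vector (Re h, -Im h, (1 - |h|^2)/2, (1 + |h|^2)/2), so H is null. *)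

Definition square (c : pt) (r : R) (q : pt) : Prop :=
  Rabs (fst q - fst c) < r /\ Rabs (snd q - snd c) < r.

Lemma square_center c r : 0 < r -> square c r c.
Proof. intros Hr. split; rewrite Rminus_diag, Rabs_R0; exact Hr. Qed.

Lemma locally_square (p : pt) (P : pt -> Prop) :
  locally p P <-> exists r, 0 < r /\ forall q, square p r q -> P q.
Proof.
  split.
  - intros [e He]. exists e. split; [apply cond_pos|]. intros q [H1 H2]. apply He. split; assumption.
  - intros [r [Hr H]]. exists (mkposreal r Hr). intros q [H1 H2]. apply H. split; assumption.
Qed.

Lemma open_contains_square (Om : pt -> Prop) p :
  open Om -> Om p -> exists r, 0 < r /\ forall q, square p r q -> Om q.
Proof. intros HO Hp. apply locally_square, HO, Hp. Qed.

Lemma open_square c r : open (square c r).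
Proof.
  intros [q1 q2] [H1 H2]; simpl in *. apply locally_square.
  set (e := Rmin (r - Rabs (q1 - fst c)) (r - Rabs (q2 - snd c))).
  assert (He1 : e <= r - Rabs (q1 - fst c)) by apply Rmin_l.
  assert (He2 : e <= r - Rabs (q2 - snd c)) by apply Rmin_r.
  exists e. split; [unfold e; apply Rmin_pos; lra|]. intros q' [H3 H4]; simpl in *. split.
  - replace (fst q' - fst c) with ((fst q' - q1) + (q1 - fst c)) by ring.
    eapply Rle_lt_trans; [apply Rabs_triang|lra].
  - replace (snd q' - snd c) with ((snd q' - q2) + (q2 - snd c)) by ring.
    eapply Rle_lt_trans; [apply Rabs_triang|lra].
Qed.

Lemma abs_between a b t c r :
  Rmin a b <= t <= Rmax a b -> Rabs (a - c) < r -> Rabs (b - c) < r -> Rabs (t - c) < r.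
Proof.
  intros [H1 H2]. unfold Rmin, Rmax in *. destruct (Rle_dec a b);
  unfold Rabs; repeat destruct Rcase_abs; lra.
Qed.

Lemma square_between_u c r a b y t : square c r (a, y) -> square c r (b, y) ->
  Rmin a b <= t <= Rmax a b -> square c r (t, y).
Proof. intros [Ha Hy] [Hb _] Ht. split; [eapply abs_between; eauto|exact Hy]. Qed.

Lemma square_between_v c r x a b t : square c r (x, a) -> square c r (x, b) ->
  Rmin a b <= t <= Rmax a b -> square c r (x, t).
Proof. intros [Hx Ha] [_ Hb] Ht. split; [exact Hx|eapply abs_between; eauto]. Qed.

Lemma locally_line_u (P : pt -> Prop) (p : pt) :
  locally p P -> locally (fst p) (fun t => P (t, snd p)).
Proof.
  intros H. apply locally_square in H. destruct H as [r [Hr H]].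
  exists (mkposreal r Hr). intros t Ht. apply H. split; [exact Ht|].
  simpl. rewrite Rminus_diag, Rabs_R0. exact Hr.
Qed.

Lemma locally_line_v (P : pt -> Prop) (p : pt) :
  locally p P -> locally (snd p) (fun t => P (fst p, t)).
Proof.
  intros H. apply locally_square in H. destruct H as [r [Hr H]].
  exists (mkposreal r Hr). intros t Ht. apply H. split; [|exact Ht].
  simpl. rewrite Rminus_diag, Rabs_R0. exact Hr.
Qed.

Definition eq_on (Om : pt -> Prop) (f g : pt -> R) := forall p, Om p -> f p = g p.

Lemma eq_on_locally Om f g p : open Om -> eq_on Om f g -> Om p -> locally p (fun q => f q = g q).
Proof. intros HO He Hp. apply (filter_imp Om); [exact He|exact (HO p Hp)]. Qed.

Lemma du_eq_on Om f g : open Om -> eq_on Om f g -> eq_on Om (du f) (du g).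
Proof.
  intros HO He p Hp. apply Derive_ext_loc, (locally_line_u (fun q => f q = g q)), (eq_on_locally Om); auto.
Qed.

Lemma dv_eq_on Om f g : open Om -> eq_on Om f g -> eq_on Om (dv f) (dv g).
Proof.
  intros HO He p Hp. apply Derive_ext_loc, (locally_line_v (fun q => f q = g q)), (eq_on_locally Om); auto.
Qed.

Lemma continuous_eq_on Om f g p :
  open Om -> eq_on Om f g -> Om p -> continuous f p -> continuous g p.
Proof. intros HO He Hp. apply continuous_ext_loc, (eq_on_locally Om); auto. Qed.

Lemma continuous_pair {U : UniformSpace} (f g : U -> R) x :
  continuous f x -> continuous g x -> continuous (fun y => (f y, g y) : pt) x.
Proof.
  intros Hf Hg. apply filterlim_locally. intros eps.
  apply (proj1 (filterlim_locally _ _)) with (eps := eps) in Hf.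
  apply (proj1 (filterlim_locally _ _)) with (eps := eps) in Hg.
  generalize (filter_and _ _ Hf Hg). apply filter_imp. intros y [H1 H2]. split; assumption.
Qed.

Definition is_gradient_on (D : pt -> Prop) (f P Q : pt -> R) : Prop :=
  forall q, D q ->
    is_derive (fun t => f (t, snd q)) (fst q) (P q) /\
    is_derive (fun t => f (fst q, t)) (snd q) (Q q).

Lemma is_gradient_on_sub (D D' : pt -> Prop) f P Q :
  (forall q, D' q -> D q) -> is_gradient_on D f P Q -> is_gradient_on D' f P Q.
Proof. intros HD H q Hq. apply H, HD, Hq. Qed.

Lemma square_mono c r r' q : r <= r' -> square c r q -> square c r' q.
Proof. intros Hr [H1 H2]. split; lra. Qed.

Lemma continuous_line_u (f : pt -> R) p :
  continuous f p -> continuous (fun t => f (t, snd p)) (fst p).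
Proof.
  intros H. apply (continuous_comp (fun t : R => (t, snd p) : pt) f).
  - apply continuous_pair; [apply continuous_id|apply continuous_const].
  - destruct p; exact H.
Qed.

Lemma continuous_line_v (f : pt -> R) p :
  continuous f p -> continuous (fun t => f (fst p, t)) (snd p).
Proof.
  intros H. apply (continuous_comp (fun t : R => (fst p, t) : pt) f).
  - apply continuous_pair; [apply continuous_const|apply continuous_id].
  - destruct p; exact H.
Qed.

Lemma continuity_2d_pt_of_continuous (f : pt -> R) x y :
  continuous f (x, y) -> continuity_2d_pt (fun u v => f (u, v)) x y.
Proof.
  intros H. apply continuity_2d_pt_filterlim.
  eapply filterlim_ext; [|exact H]. intros [a b]; reflexivity.
Qed.

Lemma eq_of_derive_0 (g : R -> R) a b :
  (forall t, Rmin a b <= t <= Rmax a b -> is_derive g t 0) -> g a = g b.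
Proof.
  intros H. destruct (MVT_gen g a b (fun _ => 0)) as [c [_ Hc]].
  - intros x Hx. apply H. lra.
  - intros x Hx. apply continuity_pt_filterlim, (ex_derive_continuous g x). eexists. apply H, Hx.
  - lra.
Qed.

Lemma MVT_abs_bound (g dg : R -> R) a b B :
  (forall t, Rmin a b <= t <= Rmax a b -> is_derive g t (dg t) /\ Rabs (dg t) <= B) ->
  Rabs (g b - g a) <= B * Rabs (b - a).
Proof.
  intros H. destruct (MVT_gen g a b dg) as [c [Hc1 Hc]].
  - intros x Hx. apply H. lra.
  - intros x Hx. apply continuity_pt_filterlim, (ex_derive_continuous g x). eexists. apply H, Hx.
  - rewrite Hc, Rabs_mult. apply Rmult_le_compat_r; [apply Rabs_pos|apply H, Hc1].
Qed.

Lemma gradient_0_const_on_squares (g : pt -> R) c r c' r' a b :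
  is_gradient_on (fun q => square c r q /\ square c' r' q) g (fun _ => 0) (fun _ => 0) ->
  square c r a -> square c r b -> square c' r' a -> square c' r' b -> g a = g b.
Proof.
  intros H Ha Hb Ha' Hb'. destruct a as [a1 a2], b as [b1 b2].
  assert (Hm : square c r (b1, a2) /\ square c' r' (b1, a2)).
  { destruct Ha, Hb, Ha', Hb'; split; split; assumption. }
  transitivity (g (b1, a2)).
  - apply (eq_of_derive_0 (fun t => g (t, a2))). intros t Ht.
    destruct Hm as [Hm Hm'].
    apply (H (t, a2)). split; [exact (square_between_u _ _ _ _ _ _ Ha Hm Ht)|exact (square_between_u _ _ _ _ _ _ Ha' Hm' Ht)].
  - apply (eq_of_derive_0 (fun t => g (b1, t))). intros t Ht.
    destruct Hm as [Hm Hm'].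
    apply (H (b1, t)). split; [exact (square_between_v _ _ _ _ _ _ Hm Hb Ht)|exact (square_between_v _ _ _ _ _ _ Hm' Hb' Ht)].
Qed.

Lemma square_bound_of_continuous (P : pt -> R) p :
  continuous P p -> exists r, 0 < r /\ forall q, square p r q -> Rabs (P q) <= Rabs (P p) + 1.
Proof.
  intros H. apply locally_square.
  apply (proj1 (filterlim_locally _ _)) with (eps := mkposreal 1 Rlt_0_1) in H.
  revert H. apply filter_imp. intros q Hq. change (Rabs (P q - P p) < 1) in Hq.
  replace (P q) with (P p + (P q - P p)) by ring.
  eapply Rle_trans; [apply Rabs_triang|lra].
Qed.

Lemma square_increment_bound f P Q p r B :
  is_gradient_on (square p r) f P Q ->
  (forall q, square p r q -> Rabs (P q) <= B /\ Rabs (Q q) <= B) ->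
  forall q, square p r q -> Rabs (f q - f p) <= B * (Rabs (fst q - fst p) + Rabs (snd q - snd p)).
Proof.
  intros HD HB [q1 q2] Hq. destruct p as [p1 p2]; simpl.
  assert (Hr : 0 < r) by (destruct Hq as [Hq1 _]; simpl in Hq1; pose proof (Rabs_pos (q1 - p1)); lra).
  assert (Hc := square_center (p1, p2) r Hr).
  assert (Hm : square (p1, p2) r (p1, q2)) by (split; [apply Hc|apply Hq]).
  assert (E1 : Rabs (f (q1, q2) - f (p1, q2)) <= B * Rabs (q1 - p1)).
  { apply (MVT_abs_bound (fun t => f (t, q2)) (fun t => P (t, q2))). intros t Ht.
    assert (Ht' := square_between_u _ _ _ _ _ _ Hm Hq Ht).
    split; [apply (HD (t, q2) Ht')|apply HB, Ht']. }
  assert (E2 : Rabs (f (p1, q2) - f (p1, p2)) <= B * Rabs (q2 - p2)).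
  { apply (MVT_abs_bound (fun t => f (p1, t)) (fun t => Q (p1, t))). intros t Ht.
    assert (Ht' := square_between_v _ _ _ _ _ _ Hc Hm Ht).
    split; [apply (HD (p1, t) Ht')|apply HB, Ht']. }
  replace (f (q1, q2) - f (p1, p2)) with ((f (q1, q2) - f (p1, q2)) + (f (p1, q2) - f (p1, p2))) by ring.
  eapply Rle_trans; [apply Rabs_triang|lra].
Qed.

Lemma continuous_of_gradient f P Q p r :
  0 < r -> is_gradient_on (square p r) f P Q -> continuous P p -> continuous Q p -> continuous f p.
Proof.
  intros Hr HD HP HQ.
  destruct (square_bound_of_continuous P p HP) as [r1 [Hr1 H1]].
  destruct (square_bound_of_continuous Q p HQ) as [r2 [Hr2 H2]].
  set (B := Rabs (P p) + Rabs (Q p) + 2).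
  assert (HB : 0 < B) by (unfold B; pose proof (Rabs_pos (P p)); pose proof (Rabs_pos (Q p)); lra).
  set (r0 := Rmin r (Rmin r1 r2)).
  assert (Hr0 : 0 < r0) by (unfold r0; repeat apply Rmin_pos; lra).
  assert (Hsub : forall q, square p r0 q -> square p r q /\ square p r1 q /\ square p r2 q).
  { assert (r0 <= r) by apply Rmin_l.
    assert (r0 <= r1) by (eapply Rle_trans; [apply Rmin_r|apply Rmin_l]).
    assert (r0 <= r2) by (eapply Rle_trans; [apply Rmin_r|apply Rmin_r]).
    intros q Hq. repeat split; eapply square_mono; eauto. }
  assert (Hinc := square_increment_bound f P Q p r0 B
    (is_gradient_on_sub _ _ f P Q (fun q Hq => proj1 (Hsub q Hq)) HD)).
  apply filterlim_locally. intros eps. apply locally_square.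
  set (d := Rmin r0 (eps / (2 * B))).
  assert (Hd : 0 < d) by (unfold d; apply Rmin_pos; [lra|apply Rdiv_lt_0_compat; [apply cond_pos|lra]]).
  exists d. split; [exact Hd|]. intros q Hq. change (Rabs (f q - f p) < eps).
  assert (Hq0 : square p r0 q) by (eapply square_mono; [apply Rmin_l|exact Hq]).
  assert (Hde : B * d <= eps / 2).
  { replace (eps / 2) with (B * (eps / (2 * B))) by (field; lra).
    apply Rmult_le_compat_l; [lra|apply Rmin_r]. }
  eapply Rle_lt_trans; [apply Hinc; [|exact Hq0]|].
  - intros q' Hq'. destruct (Hsub q' Hq') as [_ [Hq1 Hq2]].
    split; [eapply Rle_trans; [apply H1, Hq1|]|eapply Rle_trans; [apply H2, Hq2|]];
    unfold B; pose proof (Rabs_pos (P p)); pose proof (Rabs_pos (Q p)); lra.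
  - destruct Hq as [Hq1 Hq2]. pose proof (cond_pos eps).
    assert (B * Rabs (fst q - fst p) < B * d) by (apply Rmult_lt_compat_l; lra).
    assert (B * Rabs (snd q - snd p) < B * d) by (apply Rmult_lt_compat_l; lra).
    nra.
Qed.

Lemma frac_le (a b n : nat) : (0 < n)%nat -> (a <= b)%nat -> INR a / INR n <= INR b / INR n.
Proof.
  intros Hn H. apply le_INR in H. assert (0 < INR n) by (apply lt_0_INR; exact Hn).
  unfold Rdiv. apply Rmult_le_compat_r; [left; apply Rinv_0_lt_compat; lra|exact H].
Qed.

Lemma frac_0 n : INR 0 / INR n = 0.
Proof. simpl. unfold Rdiv. ring. Qed.

Lemma frac_1 n : (0 < n)%nat -> INR n / INR n = 1.
Proof. intros. field. apply not_0_INR. lia. Qed.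

Lemma frac_unit (k n : nat) : (0 < n)%nat -> (k <= n)%nat -> 0 <= INR k / INR n <= 1.
Proof.
  intros Hn Hk. rewrite <- (frac_0 n), <- (frac_1 n Hn). split; apply frac_le; lia.
Qed.

Lemma frac_S k n : (0 < n)%nat -> INR (S k) / INR n = INR k / INR n + / INR n.
Proof. intros Hn. rewrite S_INR. field. apply not_0_INR. lia. Qed.

Definition cell (n i j : nat) (t s : R) : Prop :=
  INR i / INR n <= t <= INR (S i) / INR n /\ INR j / INR n <= s <= INR (S j) / INR n.

Lemma homotopy_locally_in_square (Om : pt -> Prop) (G : pt -> R -> Prop) (H : pt -> pt) u v :
  (forall c, Om c -> exists r, 0 < r /\ G c r) -> continuous H (u, v) -> Om (H (u, v)) ->
  exists d : posreal, exists c r, G c r /\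
    forall t s, Rabs (t - u) < d -> Rabs (s - v) < d -> square c r (H (t, s)).
Proof.
  intros HG HC HOm. destruct (HG _ HOm) as [r [Hr HGr]].
  assert (L : locally (u, v) (fun z => square (H (u, v)) r (H z))).
  { apply HC, open_square, square_center, Hr. }
  apply locally_square in L. destruct L as [d [Hd L]].
  exists (mkposreal d Hd), (H (u, v)), r. split; [exact HGr|].
  intros t s Ht Hs. apply (L (t, s)). split; assumption.
Qed.

Lemma cell_side_close (n i : nat) t u e d :
  (0 < n)%nat -> / INR n < d -> d <= e -> Rabs (INR i / INR n - u) < e ->
  INR i / INR n <= t <= INR (S i) / INR n -> Rabs (t - u) < 2 * e.
Proof.
  intros Hn Hnd Hde Hu Ht. rewrite frac_S in Ht by exact Hn.
  replace (t - u) with ((t - INR i / INR n) + (INR i / INR n - u)) by ring.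
  eapply Rle_lt_trans; [apply Rabs_triang|].
  rewrite (Rabs_right (t - INR i / INR n)) by lra. lra.
Qed.

Lemma lebesgue_grid (Om : pt -> Prop) (G : pt -> R -> Prop) (H : pt -> pt) :
  (forall c, Om c -> exists r, 0 < r /\ G c r) ->
  (forall z, continuous H z) ->
  (forall t s, 0 <= t <= 1 -> 0 <= s <= 1 -> Om (H (t, s))) ->
  exists n, (0 < n)%nat /\ forall i j, (i < n)%nat -> (j < n)%nat ->
    exists c r, G c r /\ forall t s, cell n i j t s -> square c r (H (t, s)).
Proof.
  intros HG HC HOm.
  set (good := fun u v (d : posreal) => 0 <= u <= 1 -> 0 <= v <= 1 -> exists c r, G c r /\
    forall t s, Rabs (t - u) < d -> Rabs (s - v) < d -> square c r (H (t, s))).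
  assert (Hex : forall u v, exists d, good u v d).
  { intros u v. destruct (classic (0 <= u <= 1 /\ 0 <= v <= 1)) as [[Hu Hv]|Hn].
    - destruct (homotopy_locally_in_square Om G H u v HG (HC _) (HOm u v Hu Hv)) as [d Hd].
      exists d. intros _ _. exact Hd.
    - exists (mkposreal 1 Rlt_0_1). intros Hu Hv. tauto. }
  set (delta := fun u v => epsilon (inhabits (mkposreal 1 Rlt_0_1)) (good u v)).
  assert (Hdelta : forall u v, good u v (delta u v)) by (intros u v; apply epsilon_spec, Hex).
  destruct (compactness_value_2d 0 1 0 1 (fun u v => pos_div_2 (delta u v))) as [d Hd].
  destruct (archimed_cor1 d (cond_pos d)) as [n [Hnd Hn]].
  exists n. split; [exact Hn|]. intros i j Hi Hj.
  apply NNPP. intro Hno.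
  apply (Hd _ _ (frac_unit i n Hn ltac:(lia)) (frac_unit j n Hn ltac:(lia))).
  intros [u [v [Hu [Hv [Hiu [Hjv Hdu]]]]]]. simpl in Hiu, Hjv, Hdu.
  apply Hno. destruct (Hdelta u v Hu Hv) as [c [r [HGcr Hcr]]].
  exists c, r. split; [exact HGcr|]. intros t s [Ht Hs].
  apply Hcr; replace (pos (delta u v)) with (2 * (delta u v / 2)) by field;
  eapply cell_side_close; eauto.
Qed.

Fixpoint rsum (F : nat -> R) (n : nat) : R :=
  match n with O => 0 | S m => rsum F m + F m end.

Lemma rsum_ext F G n : (forall k, (k < n)%nat -> F k = G k) -> rsum F n = rsum G n.
Proof. induction n; simpl; intros H; auto. rewrite IHn, H; auto; lia. Qed.

Lemma rsum_add F a b : rsum F (a + b) = rsum F a + rsum (fun j => F (a + j)%nat) b.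
Proof.
  induction b; simpl; [rewrite Nat.add_0_r; ring|].
  rewrite Nat.add_succ_r. simpl. rewrite IHb. ring.
Qed.

Lemma rsum_block F n m : rsum F (n * m) = rsum (fun i => rsum (fun j => F (i * m + j)%nat) m) n.
Proof. induction n; simpl; auto. rewrite Nat.add_comm, rsum_add, IHn. reflexivity. Qed.

Lemma rsum_minus F G n : rsum (fun k => F k - G k) n = rsum F n - rsum G n.
Proof. induction n; simpl; [ring|rewrite IHn; ring]. Qed.

Lemma rsum_opp F n : rsum (fun k => - F k) n = - rsum F n.
Proof. induction n; simpl; [ring|rewrite IHn; ring]. Qed.

Lemma rsum_eq0 F n : (forall k, (k < n)%nat -> F k = 0) -> rsum F n = 0.
Proof.
  induction n; simpl; intros H; auto.
  rewrite IHn, H; [ring|lia|intros k Hk; apply H; lia].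
Qed.

Lemma rsum_telescope (V : nat -> R) n : rsum (fun k => V (S k) - V k) n = V n - V O.
Proof. induction n; simpl; [|rewrite IHn]; ring. Qed.

Lemma rsum_rev F n : rsum (fun k => F (n - S k)%nat) n = rsum F n.
Proof.
  assert (Hshift : forall G m, rsum G (S m) = G O + rsum (fun k => G (S k)) m).
  { intros G m. induction m; [simpl; ring|]. change (rsum G (S (S m))) with (rsum G (S m) + G (S m)).
    rewrite IHm. simpl. ring. }
  induction n; [reflexivity|].
  rewrite Hshift. replace (S n - 1)%nat with n by lia.
  rewrite (rsum_ext (fun k => F (S n - S (S k))%nat) (fun k => F (n - S k)%nat)) by (intros; f_equal; lia).
  rewrite IHn. simpl. ring.
Qed.

Definition reverse (g : R -> pt) (t : R) : pt := g (1 - t).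

Definition min1 (x : R) : R := (x + 1 - Rabs (x - 1)) / 2.
Definition max0 (x : R) : R := (x + Rabs x) / 2.

Lemma min1_le x : x <= 1 -> min1 x = x.
Proof. intros H. unfold min1. rewrite Rabs_left1 by lra. field. Qed.
Lemma min1_ge x : x >= 1 -> min1 x = 1.
Proof. intros H. unfold min1. rewrite Rabs_right by lra. field. Qed.
Lemma max0_le x : x <= 0 -> max0 x = 0.
Proof. intros H. unfold max0. rewrite Rabs_left1 by lra. field. Qed.
Lemma max0_ge x : x >= 0 -> max0 x = x.
Proof. intros H. unfold max0. rewrite Rabs_right by lra. field. Qed.

(* Clamped rather than defined by cases, so that continuity is compositional; it is the
   concatenation of g1 and g2 when [g1 1 = g2 0]. *)
Definition concat (g1 g2 : R -> pt) (t : R) : pt :=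
  (fst (g1 (min1 (2 * t))) + fst (g2 (max0 (2 * t - 1))) - fst (g2 0),
   snd (g1 (min1 (2 * t))) + snd (g2 (max0 (2 * t - 1))) - snd (g2 0)).

Lemma concat_l g1 g2 t : t <= 1/2 -> concat g1 g2 t = g1 (2 * t).
Proof.
  intros H. unfold concat. rewrite min1_le, max0_le by lra.
  destruct (g1 (2 * t)); simpl. f_equal; ring.
Qed.

Lemma concat_r g1 g2 t : g1 1 = g2 0 -> t >= 1/2 -> concat g1 g2 t = g2 (2 * t - 1).
Proof.
  intros E H. unfold concat. rewrite min1_ge, max0_ge by lra. rewrite E.
  destruct (g2 (2 * t - 1)); simpl. f_equal; ring.
Qed.

Lemma continuous_comp_R (h : R -> R) (g : R -> pt) t :
  continuity_pt h t -> (forall s, continuous g s) -> continuous (fun t => g (h t)) t.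
Proof. intros H1 H2. apply (continuous_comp h g); [apply continuity_pt_filterlim, H1|apply H2]. Qed.

Lemma continuous_fst_comp (g : R -> pt) t : continuous g t -> continuity_pt (fun t => fst (g t)) t.
Proof.
  intros H. apply continuity_pt_filterlim, (continuous_comp g fst); [exact H|].
  destruct (g t); apply continuous_fst.
Qed.

Lemma continuous_snd_comp (g : R -> pt) t : continuous g t -> continuity_pt (fun t => snd (g t)) t.
Proof.
  intros H. apply continuity_pt_filterlim, (continuous_comp g snd); [exact H|].
  destruct (g t); apply continuous_snd.
Qed.

Lemma continuous_concat g1 g2 : (forall t, continuous g1 t) -> (forall t, continuous g2 t) ->
  forall t, continuous (concat g1 g2) t.
Proof.
  intros H1 H2 t. unfold concat.
  assert (C1 : continuous (fun t => g1 (min1 (2 * t))) t) by (apply continuous_comp_R; auto; unfold min1; reg).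
  assert (C2 : continuous (fun t => g2 (max0 (2 * t - 1))) t) by (apply continuous_comp_R; auto; unfold max0; reg).
  apply continuous_pair; apply continuity_pt_filterlim;
    (apply continuity_pt_minus; [apply continuity_pt_plus|apply continuity_pt_const; intros a b; reflexivity]).
  - exact (continuous_fst_comp _ t C1).
  - exact (continuous_fst_comp _ t C2).
  - exact (continuous_snd_comp _ t C1).
  - exact (continuous_snd_comp _ t C2).
Qed.

Lemma continuous_reverse g : (forall t, continuous g t) -> forall t, continuous (reverse g) t.
Proof. intros H t. unfold reverse. apply (continuous_comp_R (fun t => 1 - t) g); [reg|exact H]. Qed.

Definition segment (a b : pt) (t : R) : pt :=
  (fst a + t * (fst b - fst a), snd a + t * (snd b - snd a)).

Lemma continuous_segment a b t : continuous (segment a b) t.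
Proof. apply continuous_pair; apply continuity_pt_filterlim; reg. Qed.

Lemma lerp_between x y t : 0 <= t <= 1 -> Rmin x y <= x + t * (y - x) <= Rmax x y.
Proof. intros Ht. unfold Rmin, Rmax. destruct (Rle_dec x y); split; nra. Qed.

Lemma square_segment c r a b t :
  square c r a -> square c r b -> 0 <= t <= 1 -> square c r (segment a b t).
Proof.
  intros [Ha1 Ha2] [Hb1 Hb2] Ht.
  split; simpl; [exact (abs_between _ _ _ _ _ (lerp_between _ _ _ Ht) Ha1 Hb1)
               |exact (abs_between _ _ _ _ _ (lerp_between _ _ _ Ht) Ha2 Hb2)].
Qed.

Lemma frac_between (a k n m : nat) : (0 < n)%nat -> (0 < m)%nat -> (a * m <= k <= S a * m)%nat ->
  INR a / INR n <= INR k / INR (n * m) <= INR (S a) / INR n.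
Proof.
  intros Hn Hm [H1 H2].
  assert (Hn' : 0 < INR n) by (apply lt_0_INR; lia).
  assert (Hm' : 0 < INR m) by (apply lt_0_INR; lia).
  apply le_INR in H1. apply le_INR in H2. rewrite mult_INR in *.
  split.
  - replace (INR a / INR n) with (INR a * INR m / (INR n * INR m)) by (field; lra).
    unfold Rdiv. apply Rmult_le_compat_r; [left; apply Rinv_0_lt_compat; nra|lra].
  - replace (INR (S a) / INR n) with (INR (S a) * INR m / (INR n * INR m)) by (field; lra).
    unfold Rdiv. apply Rmult_le_compat_r; [left; apply Rinv_0_lt_compat; nra|lra].
Qed.

Section LineIntegral.

Variables (Om : pt -> Prop) (P Q : pt -> R).

Definition local_potential (c : pt) (r : R) (f : pt -> R) : Prop :=
  0 < r /\ (forall q, square c r q -> Om q) /\ is_gradient_on (square c r) f P Q.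

Definition increment_witness (a b : pt) (v : R) : Prop :=
  exists c r f, local_potential c r f /\ square c r a /\ square c r b /\ v = f b - f a.

Definition increment (a b : pt) : R := epsilon (inhabits 0) (increment_witness a b).

Lemma increment_spec c r f a b :
  local_potential c r f -> square c r a -> square c r b -> increment a b = f b - f a.
Proof.
  intros Hf Ha Hb. unfold increment.
  destruct (epsilon_spec (inhabits 0) (increment_witness a b)) as [c' [r' [f' [Hf' [Ha' [Hb' ->]]]]]].
  { exists (f b - f a), c, r, f. auto. }
  assert (E : (fun q => f' q - f q) a = (fun q => f' q - f q) b).
  { apply (gradient_0_const_on_squares (fun q => f' q - f q) c r c' r'); auto. intros q [Hq Hq'].
    destruct (proj2 (proj2 Hf) q Hq) as [H1 H2], (proj2 (proj2 Hf') q Hq') as [H1' H2'].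
    split; [rewrite <- (Rminus_diag (P q)); exact (is_derive_minus _ _ _ _ _ H1' H1)
           |rewrite <- (Rminus_diag (Q q)); exact (is_derive_minus _ _ _ _ _ H2' H2)]. }
  simpl in E. lra.
Qed.

Definition fine_subdivision (g : R -> pt) (n : nat) : Prop :=
  (0 < n)%nat /\ forall k, (k < n)%nat -> exists c r f, local_potential c r f /\
    forall t, INR k / INR n <= t <= INR (S k) / INR n -> square c r (g t).

Definition increment_sum (g : R -> pt) (n : nat) : R :=
  rsum (fun k => increment (g (INR k / INR n)) (g (INR (S k) / INR n))) n.

Lemma fine_subdivision_ext g g' n : (forall t, g t = g' t) ->
  fine_subdivision g n -> fine_subdivision g' n /\ increment_sum g' n = increment_sum g n.
Proof.
  intros E [Hn H]. split.
  - split; [exact Hn|]. intros k Hk. destruct (H k Hk) as [c [r [f [Hf Hs]]]].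
    exists c, r, f. split; [exact Hf|]. intros t Ht. rewrite <- E. auto.
  - apply rsum_ext. intros k _. rewrite !E. reflexivity.
Qed.

Lemma fine_subdivision_refine g n m : fine_subdivision g n -> (0 < m)%nat ->
  fine_subdivision g (n * m) /\ increment_sum g (n * m) = increment_sum g n.
Proof.
  intros [Hn H] Hm. split.
  - split; [nia|]. intros k Hk.
    set (a := (k / m)%nat).
    assert (Hk1 : (a * m <= k)%nat) by (unfold a; rewrite Nat.mul_comm; apply Nat.Div0.mul_div_le).
    assert (Hk2 : (S k <= S a * m)%nat).
    { unfold a. pose proof (Nat.div_mod k m ltac:(lia)). pose proof (Nat.mod_upper_bound k m ltac:(lia)). simpl. nia. }
    assert (Ha : (a < n)%nat) by (unfold a; apply Nat.Div0.div_lt_upper_bound; nia).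
    destruct (H a Ha) as [c [r [f [Hf Hs]]]]. exists c, r, f. split; [exact Hf|].
    intros t Ht. apply Hs.
    pose proof (frac_between a k n m Hn Hm ltac:(lia)).
    pose proof (frac_between a (S k) n m Hn Hm ltac:(lia)). lra.
  - unfold increment_sum. rewrite rsum_block. apply rsum_ext. intros i Hi.
    destruct (H i Hi) as [c [r [f [Hf Hs]]]].
    set (X := fun j => g (INR (i * m + j) / INR (n * m))).
    assert (HX : forall j, (j <= m)%nat -> square c r (X j)).
    { intros j Hj. apply Hs, frac_between; auto. nia. }
    assert (HnR : 0 < INR n) by (apply lt_0_INR; lia).
    assert (HmR : 0 < INR m) by (apply lt_0_INR; lia).
    rewrite (rsum_ext _ (fun j => f (X (S j)) - f (X j))), (rsum_telescope (fun j => f (X j))).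
    + rewrite <- (increment_spec c r f) by (auto; apply HX; lia).
      unfold X. rewrite Nat.add_0_r, <- Nat.mul_succ_l, !mult_INR.
      f_equal; f_equal; field; lra.
    + intros j Hj. rewrite <- (increment_spec c r f) by (auto; apply HX; lia).
      unfold X. rewrite Nat.add_succ_r. reflexivity.
Qed.

Lemma increment_sum_unique g n n' :
  fine_subdivision g n -> fine_subdivision g n' -> increment_sum g n = increment_sum g n'.
Proof.
  intros H1 H2.
  destruct (fine_subdivision_refine g n n' H1 (proj1 H2)) as [_ E1].
  destruct (fine_subdivision_refine g n' n H2 (proj1 H1)) as [_ E2].
  rewrite <- E1, <- E2, Nat.mul_comm. reflexivity.
Qed.



Lemma fine_subdivision_reverse g n : fine_subdivision g n ->
  fine_subdivision (reverse g) n /\ increment_sum (reverse g) n = - increment_sum g n.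
Proof.
  intros [Hn H].
  assert (HnR : 0 < INR n) by (apply lt_0_INR; lia).
  assert (Key : forall k, (k < n)%nat -> 1 - INR k / INR n = INR (S (n - S k)) / INR n /\
                                         1 - INR (S k) / INR n = INR (n - S k) / INR n).
  { intros k Hk. rewrite S_INR, minus_INR by lia. rewrite S_INR. split; field; lra. }
  split.
  - split; [exact Hn|]. intros k Hk. destruct (H (n - S k)%nat ltac:(lia)) as [c [r [f [Hf Hs]]]].
    exists c, r, f. split; [exact Hf|]. intros t Ht. unfold reverse. apply Hs.
    destruct (Key k Hk) as [K1 K2]. lra.
  - unfold increment_sum.
    rewrite <- (rsum_rev (fun k => increment (g (INR k / INR n)) (g (INR (S k) / INR n)))), <- rsum_opp.
    apply rsum_ext. intros k Hk.
    destruct (H (n - S k)%nat ltac:(lia)) as [c [r [f [Hf Hs]]]].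
    destruct (Key k Hk) as [K1 K2]. unfold reverse. rewrite K1, K2.
    pose proof (frac_le (n - S k) (S (n - S k)) n Hn ltac:(lia)).
    rewrite !(increment_spec c r f); auto; try (apply Hs; lra). ring.
Qed.

Lemma increment_refl c r f a : local_potential c r f -> square c r a -> increment a a = 0.
Proof. intros Hf Ha. rewrite (increment_spec c r f); auto. ring. Qed.

Lemma fine_subdivision_concat g1 g2 n : g1 1 = g2 0 ->
  fine_subdivision g1 n -> fine_subdivision g2 n ->
  fine_subdivision (concat g1 g2) (n + n) /\
  increment_sum (concat g1 g2) (n + n) = increment_sum g1 n + increment_sum g2 n.
Proof.
  intros E [Hn H1] [_ H2].
  assert (Half : forall k, INR k / INR (n + n) = (INR k / INR n) / 2).
  { intros k. rewrite plus_INR. assert (0 < INR n) by (apply lt_0_INR; exact Hn). field. lra. }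
  assert (HalfS : forall j, INR (n + j) / INR (n + n) = (INR j / INR n) / 2 + 1 / 2).
  { intros j. rewrite !plus_INR. assert (0 < INR n) by (apply lt_0_INR; exact Hn). field. lra. }
  assert (Left : forall k, (k <= n)%nat -> concat g1 g2 (INR k / INR (n + n)) = g1 (INR k / INR n)).
  { intros k Hk. pose proof (frac_unit k n Hn Hk). rewrite Half, concat_l by lra. f_equal. lra. }
  assert (Right : forall j, (j <= n)%nat -> concat g1 g2 (INR (n + j) / INR (n + n)) = g2 (INR j / INR n)).
  { intros j Hj. pose proof (frac_unit j n Hn Hj). rewrite HalfS, concat_r by (auto; lra). f_equal. lra. }
  split.
  - split; [lia|]. intros k Hk. destruct (Nat.lt_ge_cases k n) as [Hk'|Hk'].
    + destruct (H1 k Hk') as [c [r [f [Hf Hs]]]]. exists c, r, f. split; [exact Hf|].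
      intros t Ht. rewrite !Half in Ht. pose proof (frac_unit (S k) n Hn Hk').
      rewrite concat_l by lra. apply Hs. lra.
    + destruct (H2 (k - n)%nat ltac:(lia)) as [c [r [f [Hf Hs]]]]. exists c, r, f. split; [exact Hf|].
      intros t Ht. replace k with (n + (k - n))%nat in Ht by lia.
      rewrite <- Nat.add_succ_r, !HalfS in Ht. pose proof (frac_unit (k - n) n Hn ltac:(lia)).
      rewrite concat_r by (auto; lra). apply Hs. lra.
  - unfold increment_sum. rewrite rsum_add. f_equal.
    + apply rsum_ext. intros k Hk. rewrite !Left by lia. reflexivity.
    + apply rsum_ext. intros j Hj. rewrite <- Nat.add_succ_r, !Right by lia. reflexivity.
Qed.

Hypothesis local_potentials : forall c, Om c -> exists r f, local_potential c r f.

Lemma local_potential_radius c : Om c -> exists r, 0 < r /\ exists f, local_potential c r f.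
Proof. intros Hc. destruct (local_potentials c Hc) as [r [f Hf]]. exists r. split; [apply Hf|eauto]. Qed.

Lemma fine_subdivision_exists g : path_in Om g -> exists n, fine_subdivision g n.
Proof.
  intros [Hc HOm].
  destruct (lebesgue_grid Om (fun c r => exists f, local_potential c r f) (fun z => g (fst z)))
    as [n [Hn H]].
  - exact local_potential_radius.
  - intros z. apply (continuous_comp fst g); [destruct z; apply continuous_fst|apply Hc].
  - intros t s Ht _. apply HOm, Ht.
  - exists n. split; [exact Hn|]. intros k Hk. destruct (H k O Hk Hn) as [c [r [[f Hf] Hs]]].
    exists c, r, f. split; [exact Hf|]. intros t Ht. apply (Hs t 0). split; [exact Ht|].
    rewrite frac_0. pose proof (frac_unit 1 n Hn ltac:(lia)). lra.
Qed.

Section Homotopy.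

Variables (H : pt -> pt) (N : nat) (p0 : pt).
Hypothesis HN : (0 < N)%nat.
Hypothesis Hcell : forall i j, (i < N)%nat -> (j < N)%nat ->
  exists c r, (exists f, local_potential c r f) /\ forall t s, cell N i j t s -> square c r (H (t, s)).
Hypothesis Hleft : forall s, H (0, s) = p0.
Hypothesis Hright : forall s, H (1, s) = p0.
Hypothesis Htop : forall t, H (t, 1) = p0.

Lemma cell_corner i j i' j' : (i <= i' <= S i)%nat -> (j <= j' <= S j)%nat ->
  cell N i j (INR i' / INR N) (INR j' / INR N).
Proof. intros Hi Hj. split; split; apply frac_le; lia. Qed.


Definition row (j : nat) (t : R) : pt := H (t, INR j / INR N).

Lemma increment_sum_row_step j : (j < N)%nat ->
  increment_sum (row j) N = increment_sum (row (S j)) N.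
Proof.
  intros Hj. apply Rminus_diag_uniq. unfold increment_sum, row. rewrite <- rsum_minus.
  set (V := fun i : nat => increment (H (INR i / INR N, INR j / INR N)) (H (INR i / INR N, INR (S j) / INR N))).
  assert (Hp0 : forall i, (i < N)%nat -> (i = O \/ i = N - 1)%nat -> exists c r f, local_potential c r f /\ square c r p0).
  { intros i Hi Hb. destruct (Hcell i j Hi Hj) as [c [r [[f Hf] Hs]]]. exists c, r, f. split; [exact Hf|].
    destruct Hb as [->| ->].
    - rewrite <- (Hleft (INR j / INR N)), <- (frac_0 N). apply Hs, cell_corner; lia.
    - rewrite <- (Hright (INR j / INR N)), <- (frac_1 N HN). apply Hs, cell_corner; lia. }
  assert (V0 : V O = 0).
  { destruct (Hp0 O HN (or_introl eq_refl)) as [c [r [f [Hf Hs]]]].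
    unfold V. rewrite frac_0, !Hleft. exact (increment_refl c r f p0 Hf Hs). }
  assert (VN : V N = 0).
  { destruct (Hp0 (N - 1)%nat ltac:(lia) (or_intror eq_refl)) as [c [r [f [Hf Hs]]]].
    unfold V. rewrite frac_1, !Hright by exact HN. exact (increment_refl c r f p0 Hf Hs). }
  rewrite (rsum_ext _ (fun i => - (V (S i) - V i))), rsum_opp, rsum_telescope, V0, VN; [ring|].
  intros i Hi. destruct (Hcell i j Hi Hj) as [c [r [[f Hf] Hs]]].
  unfold V. rewrite !(increment_spec c r f); try (exact Hf); try (apply Hs, cell_corner; lia). ring.
Qed.

Lemma increment_sum_row_top : increment_sum (row N) N = 0.
Proof.
  unfold increment_sum, row. apply rsum_eq0. intros i Hi.
  destruct (Hcell i (N - 1)%nat Hi ltac:(lia)) as [c [r [[f Hf] Hs]]].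
  rewrite frac_1, !Htop by exact HN. apply (increment_refl c r f p0 Hf).
  rewrite <- (Htop (INR i / INR N)), <- (frac_1 N HN). apply Hs, cell_corner; lia.
Qed.

Lemma increment_sum_row_bottom : increment_sum (row O) N = 0.
Proof.
  assert (Hdown : forall k, (k <= N)%nat -> increment_sum (row (N - k)) N = 0).
  { induction k as [|k IH]; intros Hk.
    - rewrite Nat.sub_0_r. exact increment_sum_row_top.
    - rewrite increment_sum_row_step by lia. replace (S (N - S k)) with (N - k)%nat by lia. apply IH. lia. }
  replace O with (N - N)%nat by lia. apply Hdown. lia.
Qed.

Lemma fine_subdivision_row_bottom : fine_subdivision (row O) N.
Proof.
  split; [exact HN|]. intros k Hk. destruct (Hcell k O Hk HN) as [c [r [[f Hf] Hs]]].
  exists c, r, f. split; [exact Hf|]. intros t Ht. apply Hs. split; [exact Ht|].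
  rewrite frac_0. pose proof (frac_unit 1 N HN ltac:(lia)). lra.
Qed.

End Homotopy.

Lemma increment_sum_loop g n : path_in Om g -> g 1 = g 0 -> loop_null_homotopic Om g ->
  fine_subdivision g n -> increment_sum g n = 0.
Proof.
  intros Hp Hl [H [Hc [HOm [H0 [H1 [HL HR]]]]]] Hf.
  destruct (lebesgue_grid Om (fun c r => exists f, local_potential c r f) H local_potential_radius Hc HOm)
    as [N [HN Hcell]].
  destruct (fine_subdivision_ext (row H N O) g N) as [Hg Eg].
  { intros t. unfold row. rewrite frac_0. apply H0. }
  { exact (fine_subdivision_row_bottom H N HN Hcell). }
  rewrite (increment_sum_unique g n N Hf Hg), Eg.
  exact (increment_sum_row_bottom H N (g 0) HN Hcell HL HR H1).
Qed.

Lemma increment_sum_path_indep g1 g2 n1 n2 :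
  (forall g, path_in Om g -> g 1 = g 0 -> loop_null_homotopic Om g) ->
  path_in Om g1 -> path_in Om g2 -> g1 0 = g2 0 -> g1 1 = g2 1 ->
  fine_subdivision g1 n1 -> fine_subdivision g2 n2 -> increment_sum g1 n1 = increment_sum g2 n2.
Proof.
  intros SC [C1 O1] [C2 O2] E0 E1 F1 F2.
  destruct (fine_subdivision_refine g1 n1 n2 F1 (proj1 F2)) as [F1' S1].
  destruct (fine_subdivision_refine g2 n2 n1 F2 (proj1 F1)) as [F2' S2].
  rewrite Nat.mul_comm in F2', S2.
  destruct (fine_subdivision_reverse g2 _ F2') as [F3 S3].
  assert (Ej : g1 1 = reverse g2 0) by (unfold reverse; rewrite Rminus_0_r; exact E1).
  destruct (fine_subdivision_concat g1 (reverse g2) _ Ej F1' F3) as [F4 S4].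
  set (loop := concat g1 (reverse g2)).
  assert (PL : path_in Om loop).
  { split; [apply continuous_concat; auto; apply continuous_reverse; auto|].
    intros t Ht. destruct (Rle_dec t (1/2)).
    - unfold loop. rewrite concat_l by exact r. apply O1. lra.
    - unfold loop. rewrite concat_r by (auto; lra). apply O2. lra. }
  assert (LL : loop 1 = loop 0).
  { unfold loop. rewrite (concat_l g1 (reverse g2) 0), (concat_r g1 (reverse g2) 1) by (auto; lra).
    unfold reverse. replace (1 - (2 * 1 - 1)) with 0 by ring. rewrite Rmult_0_r. auto. }
  pose proof (increment_sum_loop loop _ PL LL (SC _ PL LL) F4) as Z.
  unfold loop in Z. rewrite S4, S3 in Z. lra.
Qed.

Definition line_integral (g : R -> pt) : R :=
  increment_sum g (epsilon (inhabits 1%nat) (fine_subdivision g)).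

Lemma line_integral_spec g n : fine_subdivision g n -> line_integral g = increment_sum g n.
Proof. intros F. apply increment_sum_unique; [apply epsilon_spec; exists n|]; exact F. Qed.

Lemma increment_sum_segment c r f a b n : (0 < n)%nat ->
  local_potential c r f -> square c r a -> square c r b ->
  fine_subdivision (segment a b) n /\ increment_sum (segment a b) n = f b - f a.
Proof.
  intros Hn Hf Ha Hb.
  assert (Hseg : forall k, (k <= n)%nat -> square c r (segment a b (INR k / INR n))).
  { intros k Hk. apply square_segment; auto. apply frac_unit; auto. }
  split.
  - split; [exact Hn|]. intros k Hk. exists c, r, f. split; [exact Hf|].
    intros t Ht. apply square_segment; auto.
    pose proof (frac_unit k n Hn ltac:(lia)). pose proof (frac_unit (S k) n Hn Hk). lra.
  - unfold increment_sum.
    rewrite (rsum_ext _ (fun k => f (segment a b (INR (S k) / INR n)) - f (segment a b (INR k / INR n)))).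
    + rewrite (rsum_telescope (fun k => f (segment a b (INR k / INR n)))), frac_0, frac_1 by exact Hn.
      unfold segment. destruct a, b; simpl. f_equal; f_equal; f_equal; ring.
    + intros k Hk. apply (increment_spec c r f); auto; apply Hseg; lia.
Qed.

Lemma line_integral_extend (g0 g1 : R -> pt) c r f q' :
  (forall g, path_in Om g -> g 1 = g 0 -> loop_null_homotopic Om g) ->
  path_in Om g0 -> path_in Om g1 -> g1 0 = g0 0 -> g0 1 = c -> g1 1 = q' ->
  local_potential c r f -> square c r q' ->
  line_integral g1 = line_integral g0 + (f q' - f c).
Proof.
  intros SC [C0 O0] P1 E0 Ec E1 Hf Hq'.
  destruct (fine_subdivision_exists g0 (conj C0 O0)) as [n Fn].
  destruct (fine_subdivision_exists g1 P1) as [m Fm].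
  destruct (increment_sum_segment c r f c q' n (proj1 Fn) Hf (square_center c r (proj1 Hf)) Hq')
    as [Fs Ss].
  assert (Ej : g0 1 = segment c q' 0) by (rewrite Ec; unfold segment; destruct c; simpl; f_equal; ring).
  destruct (fine_subdivision_concat _ _ n Ej Fn Fs) as [Fc Sc].
  assert (PC : path_in Om (concat g0 (segment c q'))).
  { split; [apply continuous_concat; auto; apply continuous_segment|].
    intros t Ht. destruct (Rle_dec t (1/2)).
    - rewrite concat_l by exact r0. apply O0. lra.
    - rewrite concat_r by (auto; lra). apply (proj1 (proj2 Hf)), square_segment; auto.
      + apply square_center, Hf.
      + lra. }
  rewrite (line_integral_spec _ m Fm), (line_integral_spec _ n Fn), <- Ss, <- Sc.
  apply (increment_sum_path_indep _ _ m (n + n) SC P1 PC); [| |exact Fm|exact Fc].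
  - rewrite concat_l by lra. rewrite Rmult_0_r. exact E0.
  - rewrite concat_r by (auto; lra). rewrite E1. unfold segment. destruct q'; simpl. f_equal; ring.
Qed.

Lemma gradient_of_locally_shift (x f : pt -> R) (k : R) q a b :
  locally q (fun z => x z = f z + k) ->
  is_derive (fun t => f (t, snd q)) (fst q) a -> is_derive (fun t => f (fst q, t)) (snd q) b ->
  is_derive (fun t => x (t, snd q)) (fst q) a /\ is_derive (fun t => x (fst q, t)) (snd q) b.
Proof.
  intros L Ha Hb. split.
  - apply (is_derive_ext_loc (fun t => f (t, snd q) + k)).
    + apply (locally_line_u (fun z => f z + k = x z)). revert L. apply filter_imp. auto.
    + rewrite <- (Rplus_0_r a). exact (is_derive_plus _ _ _ _ _ Ha (is_derive_const k _)).
  - apply (is_derive_ext_loc (fun t => f (fst q, t) + k)).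
    + apply (locally_line_v (fun z => f z + k = x z)). revert L. apply filter_imp. auto.
    + rewrite <- (Rplus_0_r b). exact (is_derive_plus _ _ _ _ _ Hb (is_derive_const k _)).
Qed.

Lemma potential_exists : simply_connected Om -> exists x : pt -> R, is_gradient_on Om x P Q.
Proof.
  intros [[[p0 Hp0] PC] SC].
  set (path_to := fun q => epsilon (inhabits (fun _ : R => p0))
                             (fun g => path_in Om g /\ g 0 = p0 /\ g 1 = q)).
  assert (PT : forall q, Om q -> path_in Om (path_to q) /\ path_to q 0 = p0 /\ path_to q 1 = q).
  { intros q Hq. apply epsilon_spec, PC; auto. }
  exists (fun q => line_integral (path_to q)). intros q Hq.
  destruct (local_potentials q Hq) as [r [f Hf]].
  destruct (PT q Hq) as [Pq [Pq0 Pq1]].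
  apply (gradient_of_locally_shift (fun q => line_integral (path_to q)) f (line_integral (path_to q) - f q)).
  - apply (filter_imp (square q r)); [|apply open_square, square_center, Hf].
    intros z Hz. destruct (PT z (proj1 (proj2 Hf) z Hz)) as [Pz [Pz0 Pz1]].
    rewrite (line_integral_extend (path_to q) (path_to z) q r f z SC Pq Pz ltac:(congruence) Pq1 Pz1 Hf Hz).
    ring.
  - apply (proj2 (proj2 Hf) q), square_center, Hf.
  - apply (proj2 (proj2 Hf) q), square_center, Hf.
Qed.

End LineIntegral.

Definition ex_du (f : pt -> R) (p : pt) := ex_derive (fun t => f (t, snd p)) (fst p).
Definition ex_dv (f : pt -> R) (p : pt) := ex_derive (fun t => f (fst p, t)) (snd p).

Lemma ex_du_plus f g p : ex_du f p -> ex_du g p -> ex_du (fun q => f q + g q) p.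
Proof. intros H1 H2. exact (ex_derive_plus _ _ _ H1 H2). Qed.
Lemma ex_du_minus f g p : ex_du f p -> ex_du g p -> ex_du (fun q => f q - g q) p.
Proof. intros H1 H2. exact (ex_derive_minus _ _ _ H1 H2). Qed.
Lemma ex_du_mult f g p : ex_du f p -> ex_du g p -> ex_du (fun q => f q * g q) p.
Proof. intros H1 H2. exact (ex_derive_mult _ _ _ H1 H2). Qed.
Lemma ex_du_opp f p : ex_du f p -> ex_du (fun q => - f q) p.
Proof. intros H. exact (ex_derive_opp _ _ H). Qed.
Lemma ex_du_const c p : ex_du (fun _ => c) p.
Proof. exact (ex_derive_const c _). Qed.
Lemma ex_dv_plus f g p : ex_dv f p -> ex_dv g p -> ex_dv (fun q => f q + g q) p.
Proof. intros H1 H2. exact (ex_derive_plus _ _ _ H1 H2). Qed.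
Lemma ex_dv_minus f g p : ex_dv f p -> ex_dv g p -> ex_dv (fun q => f q - g q) p.
Proof. intros H1 H2. exact (ex_derive_minus _ _ _ H1 H2). Qed.
Lemma ex_dv_mult f g p : ex_dv f p -> ex_dv g p -> ex_dv (fun q => f q * g q) p.
Proof. intros H1 H2. exact (ex_derive_mult _ _ _ H1 H2). Qed.
Lemma ex_dv_opp f p : ex_dv f p -> ex_dv (fun q => - f q) p.
Proof. intros H. exact (ex_derive_opp _ _ H). Qed.
Lemma ex_dv_const c p : ex_dv (fun _ => c) p.
Proof. exact (ex_derive_const c _). Qed.

Lemma du_plus f g p : ex_du f p -> ex_du g p -> du (fun q => f q + g q) p = du f p + du g p.
Proof. apply Derive_plus. Qed.
Lemma du_minus f g p : ex_du f p -> ex_du g p -> du (fun q => f q - g q) p = du f p - du g p.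
Proof. apply Derive_minus. Qed.
Lemma du_mult f g p : ex_du f p -> ex_du g p -> du (fun q => f q * g q) p = du f p * g p + f p * du g p.
Proof. intros. unfold du. rewrite Derive_mult by assumption. destruct p; reflexivity. Qed.
Lemma du_opp f p : du (fun q => - f q) p = - du f p.
Proof. apply Derive_opp. Qed.
Lemma du_const c p : du (fun _ => c) p = 0.
Proof. exact (Derive_const c _). Qed.
Lemma dv_plus f g p : ex_dv f p -> ex_dv g p -> dv (fun q => f q + g q) p = dv f p + dv g p.
Proof. apply Derive_plus. Qed.
Lemma dv_minus f g p : ex_dv f p -> ex_dv g p -> dv (fun q => f q - g q) p = dv f p - dv g p.
Proof. apply Derive_minus. Qed.
Lemma dv_mult f g p : ex_dv f p -> ex_dv g p -> dv (fun q => f q * g q) p = dv f p * g p + f p * dv g p.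
Proof. intros. unfold dv. rewrite Derive_mult by assumption. destruct p; reflexivity. Qed.
Lemma dv_opp f p : dv (fun q => - f q) p = - dv f p.
Proof. apply Derive_opp. Qed.
Lemma dv_const c p : dv (fun _ => c) p = 0.
Proof. exact (Derive_const c _). Qed.

Lemma continuous_Rplus (f g : pt -> R) p :
  continuous f p -> continuous g p -> continuous (fun q => f q + g q) p.
Proof. intros Hf Hg. exact (continuous_plus f g p Hf Hg). Qed.
Lemma continuous_Rmult (f g : pt -> R) p :
  continuous f p -> continuous g p -> continuous (fun q => f q * g q) p.
Proof. intros Hf Hg. exact (continuous_mult f g p Hf Hg). Qed.
Lemma continuous_Ropp (f : pt -> R) p : continuous f p -> continuous (fun q => - f q) p.
Proof. intros Hf. exact (continuous_opp f p Hf). Qed.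

Section C1.

Variable Om : pt -> Prop.
Hypothesis HO : open Om.

Lemma C1_ex_du f p : C1_on Om f -> Om p -> ex_du f p.
Proof. intros [H _] Hp. exact (proj1 (H p Hp)). Qed.
Lemma C1_ex_dv f p : C1_on Om f -> Om p -> ex_dv f p.
Proof. intros [H _] Hp. exact (proj2 (H p Hp)). Qed.
Lemma C1_continuous f p : C1_on Om f -> Om p -> continuous f p.
Proof. intros [_ H] Hp. exact (proj1 (H p Hp)). Qed.
Lemma C1_continuous_du f p : C1_on Om f -> Om p -> continuous (du f) p.
Proof. intros [_ H] Hp. exact (proj1 (proj2 (H p Hp))). Qed.
Lemma C1_continuous_dv f p : C1_on Om f -> Om p -> continuous (dv f) p.
Proof. intros [_ H] Hp. exact (proj2 (proj2 (H p Hp))). Qed.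

Lemma C1_on_intro (f fu fv : pt -> R) :
  (forall p, Om p -> ex_du f p /\ ex_dv f p /\ continuous f p) ->
  eq_on Om (du f) fu -> eq_on Om (dv f) fv ->
  (forall p, Om p -> continuous fu p /\ continuous fv p) -> C1_on Om f.
Proof.
  intros H1 Hu Hv H3. split.
  - intros p Hp. destruct (H1 p Hp) as [Hu' [Hv' _]]. split; assumption.
  - intros p Hp. split; [apply (H1 p Hp)|split].
    + apply (continuous_eq_on Om fu); auto; [intros q Hq; symmetry; auto|apply H3, Hp].
    + apply (continuous_eq_on Om fv); auto; [intros q Hq; symmetry; auto|apply H3, Hp].
Qed.

Lemma C1_plus f g : C1_on Om f -> C1_on Om g -> C1_on Om (fun q => f q + g q).
Proof.
  intros Hf Hg. apply (C1_on_intro _ (fun q => du f q + du g q) (fun q => dv f q + dv g q)).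
  - intros p Hp. split; [|split].
    + apply ex_du_plus; eauto using C1_ex_du.
    + apply ex_dv_plus; eauto using C1_ex_dv.
    + apply continuous_Rplus; eauto using C1_continuous.
  - intros p Hp. apply du_plus; eauto using C1_ex_du.
  - intros p Hp. apply dv_plus; eauto using C1_ex_dv.
  - intros p Hp. split; apply continuous_Rplus; eauto using C1_continuous_du, C1_continuous_dv.
Qed.

Lemma C1_opp f : C1_on Om f -> C1_on Om (fun q => - f q).
Proof.
  intros Hf. apply (C1_on_intro _ (fun q => - du f q) (fun q => - dv f q)).
  - intros p Hp. split; [|split].
    + apply ex_du_opp; eauto using C1_ex_du.
    + apply ex_dv_opp; eauto using C1_ex_dv.
    + apply continuous_Ropp; eauto using C1_continuous.
  - intros p Hp. apply du_opp.
  - intros p Hp. apply dv_opp.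
  - intros p Hp. split; apply continuous_Ropp; eauto using C1_continuous_du, C1_continuous_dv.
Qed.

Lemma C1_mult f g : C1_on Om f -> C1_on Om g -> C1_on Om (fun q => f q * g q).
Proof.
  intros Hf Hg.
  apply (C1_on_intro _ (fun q => du f q * g q + f q * du g q) (fun q => dv f q * g q + f q * dv g q)).
  - intros p Hp. split; [|split].
    + apply ex_du_mult; eauto using C1_ex_du.
    + apply ex_dv_mult; eauto using C1_ex_dv.
    + apply continuous_Rmult; eauto using C1_continuous.
  - intros p Hp. apply du_mult; eauto using C1_ex_du.
  - intros p Hp. apply dv_mult; eauto using C1_ex_dv.
  - intros p Hp. split; apply continuous_Rplus; apply continuous_Rmult;
    eauto using C1_continuous, C1_continuous_du, C1_continuous_dv.
Qed.

Lemma C1_const c : C1_on Om (fun _ => c).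
Proof.
  apply (C1_on_intro _ (fun _ => 0) (fun _ => 0)).
  - intros p Hp. split; [apply ex_du_const|split; [apply ex_dv_const|apply continuous_const]].
  - intros p Hp. apply du_const.
  - intros p Hp. apply dv_const.
  - intros p Hp. split; apply continuous_const.
Qed.

Lemma C1_minus f g : C1_on Om f -> C1_on Om g -> C1_on Om (fun q => f q - g q).
Proof. intros Hf Hg. apply (C1_plus f (fun q => - g q)); [exact Hf|apply C1_opp, Hg]. Qed.

Lemma C1_eq_on f g : eq_on Om f g -> C1_on Om f -> C1_on Om g.
Proof.
  intros He Hf. apply (C1_on_intro _ (du f) (dv f)).
  - intros p Hp. split; [|split].
    + apply (ex_derive_ext_loc (fun t => f (t, snd p))); [|apply (C1_ex_du f p Hf Hp)].
      apply (locally_line_u (fun q => f q = g q)), (eq_on_locally Om); auto.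
    + apply (ex_derive_ext_loc (fun t => f (fst p, t))); [|apply (C1_ex_dv f p Hf Hp)].
      apply (locally_line_v (fun q => f q = g q)), (eq_on_locally Om); auto.
    + apply (continuous_eq_on Om f); eauto using C1_continuous.
  - intros p Hp. symmetry. apply (du_eq_on Om f g HO He p Hp).
  - intros p Hp. symmetry. apply (dv_eq_on Om f g HO He p Hp).
  - intros p Hp. split; eauto using C1_continuous_du, C1_continuous_dv.
Qed.

Lemma du_of_gradient x P Q : is_gradient_on Om x P Q -> eq_on Om (du x) P.
Proof. intros H q Hq. apply is_derive_unique, H, Hq. Qed.
Lemma dv_of_gradient x P Q : is_gradient_on Om x P Q -> eq_on Om (dv x) Q.
Proof. intros H q Hq. apply is_derive_unique, H, Hq. Qed.

Lemma C2_of_gradient x P Q : is_gradient_on Om x P Q -> C1_on Om P -> C1_on Om Q -> C2_on Om x.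
Proof.
  intros HD HP HQ.
  assert (Eu : eq_on Om P (du x)) by (intros q Hq; symmetry; apply (du_of_gradient x P Q HD q Hq)).
  assert (Ev : eq_on Om Q (dv x)) by (intros q Hq; symmetry; apply (dv_of_gradient x P Q HD q Hq)).
  split; [|split; [apply (C1_eq_on P); auto|apply (C1_eq_on Q); auto]].
  apply (C1_on_intro x P Q).
  - intros p Hp. split; [|split]; [eexists; apply HD, Hp|eexists; apply HD, Hp|].
    destruct (open_contains_square Om p HO Hp) as [r [Hr Hs]].
    apply (continuous_of_gradient x P Q p r Hr); [|eapply C1_continuous; eauto..].
    apply (is_gradient_on_sub Om); auto.
  - intros q Hq. symmetry. auto.
  - intros q Hq. symmetry. auto.
  - intros p Hp. split; eapply C1_continuous; eauto.
Qed.

End C1.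

Section SquarePrimitive.

Variables (Om : pt -> Prop) (P Q : pt -> R) (c1 c2 r : R).
Hypothesis HO : open Om.
Hypotheses (HP : C1_on Om P) (HQ : C1_on Om Q).
Hypothesis Hclosed : eq_on Om (dv P) (du Q).
Hypothesis Hsq : forall q, square (c1, c2) r q -> Om q.

Lemma square_vertical q1 q2 z : square (c1, c2) r (q1, q2) ->
  Rmin c2 q2 <= z <= Rmax c2 q2 -> square (c1, c2) r (q1, z).
Proof.
  intros Hq Hz. apply (square_between_v _ _ _ c2 q2); auto.
  destruct Hq as [Hq1 Hq2]. simpl in *. pose proof (Rabs_pos (q2 - c2)).
  split; simpl; [exact Hq1|rewrite Rminus_diag, Rabs_R0; lra].
Qed.

Definition square_primitive (z : pt) : R :=
  RInt (fun t => P (t, c2)) c1 (fst z) + RInt (fun s => Q (fst z, s)) c2 (snd z).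

Lemma ex_RInt_vertical q1 q2 : square (c1, c2) r (q1, q2) -> ex_RInt (fun s => Q (q1, s)) c2 q2.
Proof.
  intros Hq. apply (@ex_RInt_continuous R_CompleteNormedModule). intros z Hz.
  apply (continuous_line_v Q (q1, z)), (C1_continuous Om); auto. apply Hsq, (square_vertical _ q2); auto.
Qed.

Lemma RInt_du_vertical q1 q2 : square (c1, c2) r (q1, q2) ->
  RInt (fun s => Derive (fun u => Q (u, s)) q1) c2 q2 = P (q1, q2) - P (q1, c2).
Proof.
  intros Hq.
  assert (Hv : forall z, Rmin c2 q2 <= z <= Rmax c2 q2 -> Om (q1, z)).
  { intros z Hz. apply Hsq, (square_vertical _ q2); auto. }
  rewrite (RInt_ext _ (Derive (fun s => P (q1, s)))).
  - apply RInt_Derive.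
    + intros z Hz. apply (C1_ex_dv Om P (q1, z) HP (Hv z Hz)).
    + intros z Hz. apply (continuous_ext_loc _ (fun t => du Q (q1, t))).
      * apply (filter_imp (fun y => Om (q1, y))); [intros y Hy; symmetry; apply (Hclosed (q1, y) Hy)|].
        apply (locally_line_v Om (q1, z)), HO, Hv, Hz.
      * apply (continuous_line_v (du Q) (q1, z)), (C1_continuous_du Om); auto.
  - intros z Hz. symmetry. apply (Hclosed (q1, z)), Hv. lra.
Qed.

Lemma square_primitive_du q1 q2 : square (c1, c2) r (q1, q2) ->
  is_derive (fun t => square_primitive (t, q2)) q1 (P (q1, q2)).
Proof.
  intros Hq. unfold square_primitive; simpl.
  assert (Lq : locally q1 (fun t => square (c1, c2) r (t, q2))).
  { exact (locally_line_u _ (q1, q2) (open_square _ _ _ Hq)). }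
  replace (P (q1, q2)) with (P (q1, c2) + (P (q1, q2) - P (q1, c2))) by ring.
  apply (is_derive_plus (fun t => RInt (fun t0 => P (t0, c2)) c1 t) (fun t => RInt (fun s => Q (t, s)) c2 q2)).
  - apply (is_derive_RInt (fun t => P (t, c2)) (fun b => RInt (fun t => P (t, c2)) c1 b) c1 q1).
    + revert Lq. apply filter_imp. intros b Hb. apply (@RInt_correct R_CompleteNormedModule).
      apply (@ex_RInt_continuous R_CompleteNormedModule). intros z Hz.
      apply (continuous_line_u P (z, c2)), (C1_continuous Om); auto. apply Hsq.
      destruct Hb as [Hb _]. simpl in Hb. split; simpl; [eapply abs_between; eauto|].
      + rewrite Rminus_diag, Rabs_R0. pose proof (Rabs_pos (b - c1)). lra.
      + rewrite Rminus_diag, Rabs_R0. pose proof (Rabs_pos (b - c1)). lra.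
    + apply (continuous_line_u P (q1, c2)), (C1_continuous Om); auto. apply Hsq.
      apply (square_vertical q1 q2); auto. split; [apply Rmin_l|apply Rmax_l].
  - rewrite <- (RInt_du_vertical q1 q2 Hq).
    apply (is_derive_RInt_param (fun u s => Q (u, s)) c2 q2 q1).
    + revert Lq. apply filter_imp. intros x Hx t Ht.
      apply (C1_ex_du Om Q (x, t) HQ), Hsq, (square_vertical _ q2); auto.
    + intros t Ht. apply (continuity_2d_pt_of_continuous (du Q)), (C1_continuous_du Om); auto.
      apply Hsq, (square_vertical _ q2); auto.
    + revert Lq. apply filter_imp. intros x Hx. apply ex_RInt_vertical, Hx.
Qed.

Lemma square_primitive_dv q1 q2 : square (c1, c2) r (q1, q2) ->
  is_derive (fun t => square_primitive (q1, t)) q2 (Q (q1, q2)).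
Proof.
  intros Hq. unfold square_primitive; simpl.
  assert (Lq : locally q2 (fun t => square (c1, c2) r (q1, t))).
  { exact (locally_line_v _ (q1, q2) (open_square _ _ _ Hq)). }
  rewrite <- (Rplus_0_l (Q (q1, q2))).
  apply (is_derive_plus (fun _ => RInt (fun t0 => P (t0, c2)) c1 q1) (fun t => RInt (fun s => Q (q1, s)) c2 t));
    [exact (is_derive_const _ _)|].
  apply (is_derive_RInt (fun s => Q (q1, s)) (fun b => RInt (fun s => Q (q1, s)) c2 b) c2 q2).
  - revert Lq. apply filter_imp. intros b Hb.
    apply (@RInt_correct R_CompleteNormedModule), ex_RInt_vertical, Hb.
  - apply (continuous_line_v Q (q1, q2)), (C1_continuous Om); auto.
Qed.

Lemma square_primitive_gradient : is_gradient_on (square (c1, c2) r) square_primitive P Q.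
Proof. intros [q1 q2] Hq. split; [apply square_primitive_du|apply square_primitive_dv]; exact Hq. Qed.

End SquarePrimitive.

Theorem poincare_lemma (Om : pt -> Prop) (P Q : pt -> R) :
  open Om -> simply_connected Om -> C1_on Om P -> C1_on Om Q -> eq_on Om (dv P) (du Q) ->
  exists x : pt -> R, is_gradient_on Om x P Q.
Proof.
  intros HO HSC HP HQ Hclosed. apply (potential_exists Om P Q); [|exact HSC].
  intros [c1 c2] Hc. destruct (open_contains_square Om _ HO Hc) as [r [Hr Hs]].
  exists r, (square_primitive P Q c1 c2). split; [exact Hr|split; [exact Hs|]].
  apply (square_primitive_gradient Om); assumption.
Qed.

Lemma gradient_0_const (Om : pt -> Prop) (d : pt -> R) :
  open Om -> path_connected Om -> is_gradient_on Om d (fun _ => 0) (fun _ => 0) ->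
  forall a b, Om a -> Om b -> d a = d b.
Proof.
  intros HO [_ PC] HD a b Ha Hb.
  destruct (PC a b Ha Hb) as [g [Pg [<- <-]]].
  assert (HL : forall c, Om c -> exists r f, local_potential Om (fun _ => 0) (fun _ => 0) c r f).
  { intros c Hc. destruct (open_contains_square Om c HO Hc) as [r [Hr Hs]].
    exists r, d. split; [exact Hr|split; [exact Hs|]]. apply (is_gradient_on_sub Om); auto. }
  destruct (fine_subdivision_exists Om _ _ HL g Pg) as [n [Hn Fn]].
  assert (Ind : forall k, (k <= n)%nat -> d (g 0) = d (g (INR k / INR n))).
  { induction k as [|k IH]; intros Hk; [rewrite frac_0; reflexivity|].
    rewrite IH by lia. destruct (Fn k ltac:(lia)) as [c [r [f [[Hr [Hs _]] Hsq]]]].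
    assert (A1 : square c r (g (INR k / INR n))) by (apply Hsq; split; [lra|apply frac_le; lia]).
    assert (A2 : square c r (g (INR (S k) / INR n))) by (apply Hsq; split; [apply frac_le; lia|lra]).
    apply (gradient_0_const_on_squares d c r c r); auto.
    apply (is_gradient_on_sub Om); [intros q [Hq _]; apply Hs, Hq|exact HD]. }
  rewrite <- (frac_1 n Hn). apply Ind. lia.
Qed.

Lemma dz_rc x q : dz (rc x) q = (/2 * du x q, - (/2 * dv x q)).
Proof.
  unfold dz, cdu, cdv, rc, Cmult, Cminus, Cplus, Copp, Ci, RtoC, Re, Im; simpl.
  rewrite !du_const, !dv_const. unfold du, dv; cbv beta. f_equal; ring.
Qed.

Lemma dzb_dz_rc x p :
  dzb (dz (rc x)) p = (/4 * (du (du x) p + dv (dv x) p), /4 * (dv (du x) p - du (dv x) p)).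
Proof.
  assert (Re_u : du (fun q => Re (dz (rc x) q)) p = /2 * du (du x) p).
  { unfold du at 1. rewrite (Derive_ext _ (fun t => /2 * du x (t, snd p))) by (intros; rewrite dz_rc; reflexivity).
    apply Derive_scal. }
  assert (Re_v : dv (fun q => Re (dz (rc x) q)) p = /2 * dv (du x) p).
  { unfold dv at 1. rewrite (Derive_ext _ (fun t => /2 * du x (fst p, t))) by (intros; rewrite dz_rc; reflexivity).
    apply Derive_scal. }
  assert (Im_u : du (fun q => Im (dz (rc x) q)) p = - (/2 * du (dv x) p)).
  { unfold du at 1. rewrite (Derive_ext _ (fun t => - (/2 * dv x (t, snd p)))) by (intros; rewrite dz_rc; reflexivity).
    rewrite Derive_opp, Derive_scal. reflexivity. }
  assert (Im_v : dv (fun q => Im (dz (rc x) q)) p = - (/2 * dv (dv x) p)).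
  { unfold dv at 1. rewrite (Derive_ext _ (fun t => - (/2 * dv x (fst p, t)))) by (intros; rewrite dz_rc; reflexivity).
    rewrite Derive_opp, Derive_scal. reflexivity. }
  unfold dzb at 1, cdu at 1, cdv at 1. rewrite Re_u, Re_v, Im_u, Im_v.
  unfold Cmult, Cplus, Ci, RtoC; simpl. f_equal; field.
Qed.

Lemma cauchy_riemann_of_dzb_0 (h : pt -> C) p : dzb h p = RtoC 0 ->
  du (fun q => Re (h q)) p = dv (fun q => Im (h q)) p /\
  du (fun q => Im (h q)) p = - dv (fun q => Re (h q)) p.
Proof.
  intros H. unfold dzb, cdu, cdv, Cmult, Cplus, Ci, RtoC in H; simpl in H.
  injection H. intros H1 H2. split; lra.
Qed.

Lemma laplacian_of_dzb_dz M N (k : R) p :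
  dzb (dz (rc M)) p = Cmult (RtoC k) (dzb (dz (rc N)) p) ->
  du (du M) p + dv (dv M) p = k * (du (du N) p + dv (dv N) p).
Proof.
  intros H. rewrite !dzb_dz_rc in H. unfold Cmult, RtoC in H; simpl in H.
  injection H. intros H1 H2. nra.
Qed.

Lemma C2_dv_du Om f p : open Om -> C2_on Om f -> Om p -> dv (du f) p = du (dv f) p.
Proof.
  intros HO [H0 [Hu Hv]] Hp. destruct p as [x y].
  symmetry. apply (Schwarz (fun u v => f (u, v)) x y).
  - apply locally_2d_locally. apply (filter_imp Om); [|apply HO, Hp].
    intros [u v] Hz. split; [|split; [|split]].
    + exact (C1_ex_du Om f (u, v) H0 Hz).
    + exact (C1_ex_dv Om f (u, v) H0 Hz).
    + exact (C1_ex_du Om (dv f) (u, v) Hv Hz).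
    + exact (C1_ex_dv Om (du f) (u, v) Hu Hz).
  - apply (continuity_2d_pt_of_continuous (du (dv f))), (C1_continuous_du Om); auto.
  - apply (continuity_2d_pt_of_continuous (dv (du f))), (C1_continuous_dv Om); auto.
Qed.

Lemma has_partials_of_gradient (Om : pt -> Prop) x P Q : is_gradient_on Om x P Q -> has_partials_on Om x.
Proof. intros H q Hq. split; eexists; apply H, Hq. Qed.

Lemma eq_up_to_const_of_dz_eq (Om : pt -> Prop) (x y : pt -> R) :
  open Om -> path_connected Om -> has_partials_on Om x -> has_partials_on Om y ->
  (forall p, Om p -> dz (rc y) p = dz (rc x) p) -> exists c, forall p, Om p -> y p = x p + c.
Proof.
  intros HO PC Hx Hy E. destruct (proj1 PC) as [p0 Hp0].
  exists (y p0 - x p0). intros p Hp.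
  assert (K : (fun q => y q - x q) p = (fun q => y q - x q) p0).
  { apply (gradient_0_const Om (fun q => y q - x q)); auto. intros q Hq.
    pose proof (E q Hq) as Eq. rewrite !dz_rc in Eq. injection Eq. intros E2 E1.
    destruct (Hy q Hq) as [Yu Yv], (Hx q Hq) as [Xu Xv]. split.
    - replace 0 with (du y q - du x q) by lra.
      exact (is_derive_minus _ _ _ _ _ (Derive_correct _ _ Yu) (Derive_correct _ _ Xu)).
    - replace 0 with (dv y q - dv x q) by lra.
      exact (is_derive_minus _ _ _ _ _ (Derive_correct _ _ Yv) (Derive_correct _ _ Xv)). }
  simpl in K. lra.
Qed.

Section Weierstrass.

Variables (Om : pt -> Prop) (h : pt -> C) (M N : pt -> R).
Hypothesis HO : open Om.
Hypothesis HW : weierstrass_data_2 Om h M N.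

Lemma C2_M : C2_on Om M. Proof. apply HW. Qed.
Lemma C2_N : C2_on Om N. Proof. apply HW. Qed.
Lemma C1_Re_h : C1_on Om (fun q => Re (h q)). Proof. apply HW. Qed.
Lemma C1_Im_h : C1_on Om (fun q => Im (h q)). Proof. apply HW. Qed.
Lemma C1_M : C1_on Om M. Proof. apply C2_M. Qed.
Lemma C1_N : C1_on Om N. Proof. apply C2_N. Qed.
Lemma C1_du_M : C1_on Om (du M). Proof. apply C2_M. Qed.
Lemma C1_dv_M : C1_on Om (dv M). Proof. apply C2_M. Qed.
Lemma C1_du_N : C1_on Om (du N). Proof. apply C2_N. Qed.
Lemma C1_dv_N : C1_on Om (dv N). Proof. apply C2_N. Qed.

#[local] Hint Resolve C1_Re_h C1_Im_h C1_M C1_N C1_du_M C1_dv_M C1_du_N C1_dv_N : weierstrass.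
#[local] Hint Resolve C1_ex_du C1_ex_dv : weierstrass.
#[local] Hint Resolve ex_du_plus ex_du_minus ex_du_mult ex_du_opp ex_du_const : weierstrass.
#[local] Hint Resolve ex_dv_plus ex_dv_minus ex_dv_mult ex_dv_opp ex_dv_const : weierstrass.

Ltac solve_C1 := repeat match goal with
  | |- C1_on _ (fun q => _ + _) => apply (C1_plus Om HO)
  | |- C1_on _ (fun q => _ - _) => apply (C1_minus Om HO)
  | |- C1_on _ (fun q => _ * _) => apply (C1_mult Om HO)
  | |- C1_on _ (fun q => - _) => apply (C1_opp Om HO)
  | |- C1_on _ (fun _ => / 2) => apply (C1_const Om HO)
  | |- C1_on _ (fun _ => 1) => apply (C1_const Om HO)
  | |- C1_on _ _ => solve [auto with weierstrass]
  end.

Ltac expand_partials := repeat first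
  [ rewrite du_plus by eauto 15 with weierstrass | rewrite du_minus by eauto 15 with weierstrass
  | rewrite du_mult by eauto 15 with weierstrass | rewrite du_opp | rewrite du_const
  | rewrite dv_plus by eauto 15 with weierstrass | rewrite dv_minus by eauto 15 with weierstrass
  | rewrite dv_mult by eauto 15 with weierstrass | rewrite dv_opp | rewrite dv_const ].

(* (P_k, Q_k) = (2 Re, -2 Im) of the k-th entry of the Weierstrass representation, so that the
   x_k with gradient (P_k, Q_k) has d_z x_k equal to that entry; alpha + i beta = (1 + h^2)/2. *)
Definition P2 (q : pt) : R := - dv M q + Re (h q) * dv N q - Im (h q) * du N q.
Definition Q2 (q : pt) : R := du M q - Re (h q) * du N q - Im (h q) * dv N q.
Definition alpha (q : pt) : R := /2 * (1 + Re (h q) * Re (h q) - Im (h q) * Im (h q)).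
Definition beta (q : pt) : R := Re (h q) * Im (h q).
Definition P3 (q : pt) : R :=
  - (Re (h q) * du M q + Im (h q) * dv M q) + alpha q * du N q + beta q * dv N q.
Definition Q3 (q : pt) : R :=
  Im (h q) * du M q - Re (h q) * dv M q - beta q * du N q + alpha q * dv N q.

Lemma C1_P2 : C1_on Om P2. Proof. unfold P2. solve_C1. Qed.
Lemma C1_Q2 : C1_on Om Q2. Proof. unfold Q2. solve_C1. Qed.
Lemma C1_alpha : C1_on Om alpha. Proof. unfold alpha. solve_C1. Qed.
Lemma C1_beta : C1_on Om beta. Proof. unfold beta. solve_C1. Qed.

#[local] Hint Resolve C1_alpha C1_beta : weierstrass.

Lemma C1_P3 : C1_on Om P3. Proof. unfold P3. solve_C1. Qed.
Lemma C1_Q3 : C1_on Om Q3. Proof. unfold Q3. solve_C1. Qed.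

#[local] Hint Resolve C1_P3 C1_Q3 : weierstrass.

Section AtPoint.

Variable p : pt.
Hypothesis Hp : Om p.

Definition lap_N : R := du (du N) p + dv (dv N) p.

Lemma second_order_relations :
  du (fun q => Re (h q)) p = dv (fun q => Im (h q)) p /\
  du (fun q => Im (h q)) p = - dv (fun q => Re (h q)) p /\
  dv (du M) p = du (dv M) p /\ dv (du N) p = du (dv N) p /\
  du (du M) p = Re (h p) * lap_N - dv (dv M) p.
Proof.
  destruct HW as [_ [_ [_ [_ [Hh [HL _]]]]]].
  destruct (cauchy_riemann_of_dzb_0 h p (Hh p Hp)) as [CR1 CR2].
  pose proof (laplacian_of_dzb_dz M N (Re (h p)) p (HL p Hp)) as L. unfold lap_N.
  repeat split; auto; [apply (C2_dv_du Om); auto using C2_M, C2_N..|lra].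
Qed.

Ltac simplify_at_p :=
  destruct second_order_relations as [R1 [R2 [R3 [R4 R5]]]]; expand_partials;
  unfold alpha, beta; expand_partials; rewrite ?R1, ?R2, ?R3, ?R4, ?R5; unfold lap_N.

Lemma closed_2 : dv P2 p = du Q2 p.
Proof. unfold P2, Q2. simplify_at_p. ring. Qed.

Lemma closed_3 : dv P3 p = du Q3 p.
Proof. unfold P3, Q3. simplify_at_p. field. Qed.

Lemma div_2 : du P2 p + dv Q2 p = - Im (h p) * lap_N.
Proof. unfold P2, Q2. simplify_at_p. ring. Qed.

Lemma div_3 :
  du P3 p + dv Q3 p = /2 * (1 - Re (h p) * Re (h p) - Im (h p) * Im (h p)) * lap_N.
Proof. unfold P3, Q3. simplify_at_p. field. Qed.

End AtPoint.

Lemma WRep_isotropic p : lor (WRep h M N p) (WRep h M N p) = RtoC 0.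
Proof.
  unfold WRep. destruct (h p) as [a b], (dz (rc M) p) as [m1 m2], (dz (rc N) p) as [n1 n2].
  unfold lor, cadd4, cscale4, Cmult, Cplus, Cminus, Copp, Ci, RtoC; simpl.
  apply injective_projections; simpl; field.
Qed.

Lemma WRep_hermitian_norm p :
  lor (WRep h M N p) (conj4 (WRep h M N p)) =
  RtoC (2 * Cmod (Cminus (dz (rc M) p) (Cmult (RtoC (Re (h p))) (dz (rc N) p))) ^ 2).
Proof.
  unfold WRep. destruct (h p) as [a b], (dz (rc M) p) as [m1 m2], (dz (rc N) p) as [n1 n2].
  unfold Cmod. rewrite pow2_sqrt.
  - unfold lor, conj4, cadd4, cscale4, Cconj, Cmult, Cplus, Cminus, Copp, Ci, RtoC, Re, Im; simpl.
    apply injective_projections; simpl; field.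
  - apply Rplus_le_le_0_compat; apply pow2_ge_0.
Qed.

Section Surface.

Variables x2 x3 : pt -> R.
Hypothesis Hx2 : is_gradient_on Om x2 P2 Q2.
Hypothesis Hx3 : is_gradient_on Om x3 P3 Q3.

Definition x4 (q : pt) : R := N q - x3 q.
Definition P4 (q : pt) : R := du N q - P3 q.
Definition Q4 (q : pt) : R := dv N q - Q3 q.

Lemma gradient_x4 : is_gradient_on Om x4 P4 Q4.
Proof.
  intros q Hq. destruct (Hx3 q Hq) as [H1 H2]. split.
  - exact (is_derive_minus _ _ _ _ _ (Derive_correct _ _ (C1_ex_du Om N q C1_N Hq)) H1).
  - exact (is_derive_minus _ _ _ _ _ (Derive_correct _ _ (C1_ex_dv Om N q C1_N Hq)) H2).
Qed.

Lemma C1_P4 : C1_on Om P4. Proof. unfold P4. solve_C1. Qed.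
Lemma C1_Q4 : C1_on Om Q4. Proof. unfold Q4. solve_C1. Qed.

Lemma Xz_representation p : Om p -> Xz M x2 x3 x4 p = WRep h M N p.
Proof.
  intros Hp. unfold Xz, WRep. rewrite !dz_rc.
  rewrite (du_of_gradient Om _ _ _ Hx2 p Hp), (dv_of_gradient Om _ _ _ Hx2 p Hp),
    (du_of_gradient Om _ _ _ Hx3 p Hp), (dv_of_gradient Om _ _ _ Hx3 p Hp),
    (du_of_gradient Om _ _ _ gradient_x4 p Hp), (dv_of_gradient Om _ _ _ gradient_x4 p Hp).
  unfold P4, Q4, P2, Q2, P3, Q3, alpha, beta. destruct (h p) as [a b].
  unfold cadd4, cscale4, Cmult, Cplus, Cminus, Copp, Ci, RtoC, Re, Im; simpl.
  repeat apply injective_projections; simpl; field.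
Qed.

Lemma Lambda_formula p : Om p -> Lambda M x2 x3 x4 p =
  4 * (Cmod (Cminus (dz (rc M) p) (Cmult (RtoC (Re (h p))) (dz (rc N) p)))) ^ 2.
Proof.
  intros Hp. unfold Lambda. rewrite Xz_representation, WRep_hermitian_norm by exact Hp.
  unfold Re, RtoC; simpl. ring.
Qed.

Lemma conformal_spacelike : conformal_spacelike_immersion Om M x2 x3 x4.
Proof.
  split; [exact C2_M|split; [|split; [|split]]].
  - exact (C2_of_gradient Om HO x2 P2 Q2 Hx2 C1_P2 C1_Q2).
  - exact (C2_of_gradient Om HO x3 P3 Q3 Hx3 C1_P3 C1_Q3).
  - exact (C2_of_gradient Om HO x4 P4 Q4 gradient_x4 C1_P4 C1_Q4).
  - intros p Hp. split; [|split].
    + rewrite Xz_representation by exact Hp. apply WRep_isotropic.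
    + rewrite Xz_representation, WRep_hermitian_norm by exact Hp. reflexivity.
    + rewrite Lambda_formula by exact Hp. destruct HW as [_ [_ [_ [_ [_ [_ Hnz]]]]]].
      pose proof (proj1 (Cmod_gt_0 _) (Hnz p Hp)). nra.
Qed.

Lemma dzb_dz_of_gradient x P Q p : is_gradient_on Om x P Q -> Om p ->
  dzb (dz (rc x)) p = (/4 * (du P p + dv Q p), /4 * (dv P p - du Q p)).
Proof.
  intros Hx Hp. rewrite dzb_dz_rc.
  rewrite (du_eq_on Om _ _ HO (du_of_gradient Om x P Q Hx) p Hp),
    (dv_eq_on Om _ _ HO (dv_of_gradient Om x P Q Hx) p Hp),
    (dv_eq_on Om _ _ HO (du_of_gradient Om x P Q Hx) p Hp),
    (du_eq_on Om _ _ HO (dv_of_gradient Om x P Q Hx) p Hp).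
  reflexivity.
Qed.

Lemma Xzzb_formula p : Om p ->
  Xzzb M x2 x3 x4 p = cscale4 (RtoC (/4 * lap_N p))
    (RtoC (Re (h p)), RtoC (- Im (h p)),
     RtoC (/2 * (1 - Re (h p) * Re (h p) - Im (h p) * Im (h p))),
     RtoC (/2 * (1 + Re (h p) * Re (h p) + Im (h p) * Im (h p)))).
Proof.
  intros Hp. unfold Xzzb.
  rewrite (dzb_dz_of_gradient x2 P2 Q2 p Hx2 Hp), (dzb_dz_of_gradient x3 P3 Q3 p Hx3 Hp),
    (dzb_dz_of_gradient x4 P4 Q4 p gradient_x4 Hp), dzb_dz_rc.
  assert (Hdiv4 : du P4 p + dv Q4 p = lap_N p - (du P3 p + dv Q3 p)).
  { unfold P4, Q4, lap_N. rewrite du_minus, dv_minus by eauto 15 with weierstrass. ring. }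
  assert (Hcurl4 : dv P4 p - du Q4 p = (dv (du N) p - du (dv N) p) - (dv P3 p - du Q3 p)).
  { unfold P4, Q4. rewrite dv_minus, du_minus by eauto 15 with weierstrass. ring. }
  rewrite Hdiv4, Hcurl4, div_2, div_3, closed_2, closed_3 by exact Hp.
  destruct (second_order_relations p Hp) as [_ [_ [R3 [R4 R5]]]]. rewrite R3, R4, R5.
  unfold cscale4, Cmult, RtoC; simpl. repeat apply injective_projections; simpl; field.
Qed.

Lemma marginally_trapped_surface : marginally_trapped Om M x2 x3 x4.
Proof.
  intros p Hp. unfold Hmean. rewrite Xzzb_formula by exact Hp.
  generalize (4 / Lambda M x2 x3 x4 p). intros k.
  unfold lor, cscale4, Cmult, Cplus, Cminus, RtoC; simpl.
  apply injective_projections; simpl; field.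
Qed.

Lemma Xz_unique : path_connected Om ->
  forall y1 y2 y3 y4 : pt -> R,
    has_partials_on Om y1 -> has_partials_on Om y2 ->
    has_partials_on Om y3 -> has_partials_on Om y4 ->
    (forall p, Om p -> Xz y1 y2 y3 y4 p = WRep h M N p) ->
    exists c1 c2 c3 c4 : R, forall p, Om p ->
      y1 p = M p + c1 /\ y2 p = x2 p + c2 /\ y3 p = x3 p + c3 /\ y4 p = x4 p + c4.
Proof.
  intros PC y1 y2 y3 y4 H1 H2 H3 H4 E.
  assert (E' : forall p, Om p -> Xz y1 y2 y3 y4 p = Xz M x2 x3 x4 p).
  { intros p Hp. rewrite E, Xz_representation by exact Hp. reflexivity. }
  destruct (eq_up_to_const_of_dz_eq Om M y1 HO PC (proj1 C1_M) H1) as [c1 K1].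
  { intros p Hp. exact (f_equal (fun v => fst (fst (fst v))) (E' p Hp)). }
  destruct (eq_up_to_const_of_dz_eq Om x2 y2 HO PC (has_partials_of_gradient _ _ _ _ Hx2) H2) as [c2 K2].
  { intros p Hp. exact (f_equal (fun v => snd (fst (fst v))) (E' p Hp)). }
  destruct (eq_up_to_const_of_dz_eq Om x3 y3 HO PC (has_partials_of_gradient _ _ _ _ Hx3) H3) as [c3 K3].
  { intros p Hp. exact (f_equal (fun v => snd (fst v)) (E' p Hp)). }
  destruct (eq_up_to_const_of_dz_eq Om x4 y4 HO PC (has_partials_of_gradient _ _ _ _ gradient_x4) H4) as [c4 K4].
  { intros p Hp. exact (f_equal snd (E' p Hp)). }
  exists c1, c2, c3, c4. intros p Hp. auto.
Qed.

End Surface.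

End Weierstrass.

Theorem mainTheorem6 (Om : pt -> Prop) (h : pt -> C) (M N : pt -> R) :
  simply_connected_domain Om ->
  weierstrass_data_2 Om h M N ->
  exists x1 x2 x3 x4 : pt -> R,
    (forall p, Om p -> Xz x1 x2 x3 x4 p = WRep h M N p) /\
    (forall y1 y2 y3 y4 : pt -> R,
       has_partials_on Om y1 -> has_partials_on Om y2 ->
       has_partials_on Om y3 -> has_partials_on Om y4 ->
       (forall p, Om p -> Xz y1 y2 y3 y4 p = WRep h M N p) ->
       exists c1 c2 c3 c4 : R, forall p, Om p ->
         y1 p = x1 p + c1 /\ y2 p = x2 p + c2 /\
         y3 p = x3 p + c3 /\ y4 p = x4 p + c4) /\
    conformal_spacelike_immersion Om x1 x2 x3 x4 /\
    marginally_trapped Om x1 x2 x3 x4 /\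
    (forall p, Om p ->
       Lambda x1 x2 x3 x4 p =
       4 * (Cmod (Cminus (dz (rc M) p) (Cmult (RtoC (Re (h p))) (dz (rc N) p)))) ^ 2) /\
    (exists a b : R, forall p, Om p ->
       x1 p = M p + a /\ x3 p + x4 p = N p + b).
Proof.
  intros [HO HSC] HW.
  destruct (poincare_lemma Om (P2 h M N) (Q2 h M N) HO HSC) as [x2 Hx2].
  { exact (C1_P2 Om h M N HO HW). }
  { exact (C1_Q2 Om h M N HO HW). }
  { intros p Hp. exact (closed_2 Om h M N HO HW p Hp). }
  destruct (poincare_lemma Om (P3 h M N) (Q3 h M N) HO HSC) as [x3 Hx3].
  { exact (C1_P3 Om h M N HO HW). }
  { exact (C1_Q3 Om h M N HO HW). }
  { intros p Hp. exact (closed_3 Om h M N HO HW p Hp). }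
  exists M, x2, x3, (x4 N x3).
  split; [|split; [|split; [|split; [|split]]]].
  - exact (Xz_representation Om h M N HW x2 x3 Hx2 Hx3).
  - exact (Xz_unique Om h M N HO HW x2 x3 Hx2 Hx3 (proj1 HSC)).
  - exact (conformal_spacelike Om h M N HO HW x2 x3 Hx2 Hx3).
  - exact (marginally_trapped_surface Om h M N HO HW x2 x3 Hx2 Hx3).
  - exact (Lambda_formula Om h M N HW x2 x3 Hx2 Hx3).
  - exists 0, 0. intros p Hp. unfold x4. split; ring.
Qed.
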